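(* Let $f(y)=\sum_{k\ge0}\frac{(-y/16)^k}{(k!)^2}$ (so $f(y)=J_0(\tfrac12\sqrt{y})$ for $y\ge0$ and $f(-y^2)=I_0(\tfrac12 y)$). Define, for $(R,u)\in\mathbb{R}^2$ and $s\in\mathbb{R}$, the function $$\chi^\sharp(R,u-s)=\tfrac12\,\mathrm{sgn}(R)\,e^{R/2}f(|u-s|^2-R^2)\mathbf{1}_{|u-s|<|R|}$$ and the measure (for fixed $R$, a measure in $u-s$) $$\chi^\flat(R,u-s)=\tfrac12e^{R/2}(\delta_{u-s=R}+\delta_{u-s=-R})-\tfrac12e^{R/2}\Big(\tfrac12f((u-s)^2-R^2)+2Rf'((u-s)^2-R^2)\Big)\mathbf{1}_{|u-s|<|R|}.$$ Then, in the sense of distributions for $(R,u)\in\mathbb{R}^2$, $\chi^\sharp$ solves $\chi^\sharp_{RR}-\chi^\sharp_{uu}-\chi^\sharp_R=0$ with $\lim_{R\to0}\chi^\sharp(R,\cdot)=0$ and $\lim_{R\to0}\chi^\sharp_R(R,\cdot)=\delta_{u=s}$, and $\chi^\flat$ solves $\chi^\flat_{RR}-\chi^\flat_{uu}-\chi^\flat_R=0$ with $\lim_{R\to0}\chi^\flat(R,\cdot)=\delta_{u=s}$ and $\lim_{R\to0}\chi^\flat_R(R,\cdot)=0$. Moreover $\lim_{R\to-\infty}\chi^\sharp(R,\cdot)=\lim_{R\to-\infty}\chi^\flat(R,\cdot)=0$, and $\chi^\flat(R,u-s)=\chi^\sharp_R(R,u-s)-\chi^\sharp(R,u-s)$.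
   Context: $J_0$ and $I_0$ denote the Bessel and modified Bessel functions of the first kind of order $0$; $\mathbf{1}$ denotes an indicator function. The equation $\eta_{RR}-\eta_{uu}-\eta_R=0$ is the entropy equation $\eta_{\rho\rho}-\rho^{-2}\eta_{uu}=0$ of isothermal gas dynamics ($p(\rho)=\rho$) written in the variable $R=\log\rho$. *)

From Stdlib Require Import Reals List Factorial.
From Coquelicot Require Import Coquelicot.
Open Scope R_scope.

Definition f_coef (k : nat) : R := (- / 16) ^ k / (INR (fact k)) ^ 2.
Definition f (y : R) : R := PSeries f_coef y.
Definition f' (y : R) : R := Derive f y.

Definition sgn (x : R) : R :=
  if Rlt_dec 0 x then 1 else if Rlt_dec x 0 then -1 else 0.

Definition ind_cone (R0 v : R) : R :=
  if Rlt_dec (Rabs v) (Rabs R0) then 1 else 0.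

Definition int_R (g : R -> R) : R :=
  RInt_gen g (Rbar_locally m_infty) (Rbar_locally p_infty).

Definition chi_sharp (s R0 u : R) : R :=
  / 2 * sgn R0 * exp (R0 / 2) * f ((u - s) ^ 2 - R0 ^ 2) * ind_cone R0 (u - s).

(** NB: the factor sgn R0 is 1 for R0 > 0 (the paper's displayed formula);
    it is needed for R0 < 0 so that chi^flat = chi^sharp_R - chi^sharp. *)
Definition chi_flat_ac (s R0 u : R) : R :=
  - (/ 2 * sgn R0 * exp (R0 / 2)
     * (/ 2 * f ((u - s) ^ 2 - R0 ^ 2) + 2 * R0 * f' ((u - s) ^ 2 - R0 ^ 2)))
  * ind_cone R0 (u - s).

Definition test1 (psi : R -> R) : Prop :=
  (forall (n : nat) (x : R), ex_derive (Derive_n psi n) x) /\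
  (exists M : R, forall x, M < Rabs x -> psi x = 0).

Definition dR (phi : R -> R -> R) : R -> R -> R :=
  fun x y => Derive (fun t => phi t y) x.
Definition du (phi : R -> R -> R) : R -> R -> R :=
  fun x y => Derive (fun t => phi x t) y.

Fixpoint Dw (w : list bool) (phi : R -> R -> R) : R -> R -> R :=
  match w with
  | nil => phi
  | b :: w' => if b then dR (Dw w' phi) else du (Dw w' phi)
  end.

Definition test2 (phi : R -> R -> R) : Prop :=
  (forall (w : list bool) (x y : R),
      ex_derive (fun t => Dw w phi t y) x /\
      ex_derive (fun t => Dw w phi x t) y /\
      continuity_2d_pt (Dw w phi) x y) /\
  (exists M : R, forall x y, M < Rabs x \/ M < Rabs y -> phi x y = 0).

(** formal adjoint of L = d_RR - d_uu - d_R :  L* phi = phi_RR - phi_uu + phi_R *)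
Definition Ladj (phi : R -> R -> R) : R -> R -> R :=
  fun x y => dR (dR phi) x y - du (du phi) x y + dR phi x y.

Definition pair_sharp (s R0 : R) (psi : R -> R) : R :=
  int_R (fun u => chi_sharp s R0 u * psi u).

Definition pair_flat (s R0 : R) (psi : R -> R) : R :=
  / 2 * exp (R0 / 2) * (psi (s + R0) + psi (s - R0))
  + int_R (fun u => chi_flat_ac s R0 u * psi u).

Definition dist_sharp (s : R) (phi : R -> R -> R) : R :=
  int_R (fun R0 => pair_sharp s R0 (phi R0)).
Definition dist_flat (s : R) (phi : R -> R -> R) : R :=
  int_R (fun R0 => pair_flat s R0 (phi R0)).

From Pilot Require Import Defs.
From Stdlib Require Import Reals.
From Coquelicot Require Import Coquelicot.
Open Scope R_scope.

From Stdlib Require Import Lra Lia Factorial FunctionalExtensionality.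
(* [Reals] also exports an [f]; make [f] denote [Defs.f] again. *)
Import Defs.

(* Substituting [u = s + R t], the pairing of [chi_sharp(R, . - s)] with [psi] becomes
   [R * int_{-1}^{1} W(R, t) psi(s + R t) dt] with [W(R, t) = e^(R/2) f(R^2 (t^2 - 1)) / 2]
   (the sign of [R] cancels against the orientation of [t]), and the pairing of [chi_sharp_R]
   is the boundary term [e^(R/2) (psi(s + R) + psi(s - R)) / 2] plus a similar integral.
   Differentiating under the integral sign and integrating by parts in [t], using the Bessel
   equation [y f'' + f' + f / 16 = 0], gives for test functions [G] depending on [R]
     d/dR <chi_sharp, G> = <chi_sharp_R, G> + <chi_sharp, G_R>,
     d/dR <chi_sharp_R, G> = <chi_sharp_R, G> + <chi_sharp, G_uu> + <chi_sharp_R, G_R>.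
   Hence [<chi_sharp(R), L* phi(R)>] is the [R]-derivative of a compactly supported function
   and integrates to [0], and so does [<chi_flat(R), L* phi(R)>] since
   [chi_flat = chi_sharp_R - chi_sharp] and [L*] commutes with [d/dR].  The initial data are
   the values at [R = 0].  As [R -> -oo] the kernels are [O(e^(R/2) I0(|R|/2)) = o(1)] on the
   cone, which follows from [C(2k, k) / 4^k -> 0], and the support of [psi] meets the cone in
   a [t]-interval of length [O(1 / |R|)], which absorbs the factor [R]. *)

(** * The series [f] *)

Lemma is_derive_PSeries_entire (a : nat -> R) (x : R) :
  CV_radius a = p_infty -> is_derive (PSeries a) x (PSeries (PS_derive a) x).
Proof. intros Ha. apply is_derive_PSeries. rewrite Ha. exact I. Qed.

Lemma CV_radius_PS_derive_entire (a : nat -> R) :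
  CV_radius a = p_infty -> CV_radius (PS_derive a) = p_infty.
Proof. intros Ha. rewrite CV_radius_derive. exact Ha. Qed.

Lemma ex_pseries_entire (a : nat -> R) (x : R) :
  CV_radius a = p_infty -> ex_pseries a x.
Proof. intros Ha. apply CV_radius_inside. rewrite Ha. exact I. Qed.

Lemma f_coef_neq0 (n : nat) : f_coef n <> 0.
Proof.
  unfold f_coef. apply Rmult_integral_contrapositive_currified.
  - apply pow_nonzero. lra.
  - apply Rinv_neq_0_compat, pow_nonzero, INR_fact_neq_0.
Qed.

Lemma f_coef_S (n : nat) : f_coef (S n) = f_coef n * (- / 16) / INR (S n) ^ 2.
Proof.
  unfold f_coef. rewrite fact_simpl, mult_INR.
  assert (INR (S n) <> 0) by (apply not_0_INR; lia).
  pose proof (INR_fact_neq_0 n).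
  simpl pow. field. split; assumption.
Qed.

Lemma CV_radius_f_coef : CV_radius f_coef = p_infty.
Proof.
  apply CV_radius_infinite_DAlembert; [exact f_coef_neq0 |].
  apply is_lim_seq_ext with (fun n => / 16 * / (INR (S n) * INR (S n))).
  { intro n. rewrite f_coef_S.
    assert (0 < INR (S n)) by (apply lt_0_INR; lia).
    pose proof (f_coef_neq0 n).
    replace (f_coef n * - / 16 / INR (S n) ^ 2 / f_coef n)
      with (- (/ 16 * / (INR (S n) * INR (S n)))) by (field; lra).
    rewrite Rabs_Ropp, Rabs_right; [reflexivity |].
    apply Rle_ge, Rmult_le_pos; [lra |]. apply Rlt_le, Rinv_0_lt_compat. nra. }
  replace (Finite 0) with (Rbar_mult (/ 16) (Rbar_inv p_infty)) by (simpl; f_equal; ring).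
  apply is_lim_seq_scal_l, is_lim_seq_inv; [| discriminate].
  apply (is_lim_seq_mult _ _ p_infty p_infty); [| | reflexivity];
    apply (is_lim_seq_incr_1 INR), is_lim_seq_INR.
Qed.

Definition f'' (y : R) : R := Derive f' y.

Lemma f'_PSeries (y : R) : f' y = PSeries (PS_derive f_coef) y.
Proof. apply Derive_PSeries. rewrite CV_radius_f_coef. exact I. Qed.

Lemma f''_PSeries (y : R) : f'' y = PSeries (PS_derive (PS_derive f_coef)) y.
Proof.
  unfold f''. rewrite (Derive_ext _ _ _ f'_PSeries).
  apply Derive_PSeries. rewrite CV_radius_PS_derive_entire by exact CV_radius_f_coef. exact I.
Qed.

Lemma is_derive_f (y : R) : is_derive f y (f' y).
Proof. rewrite f'_PSeries. apply is_derive_PSeries_entire, CV_radius_f_coef. Qed.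

Lemma is_derive_f' (y : R) : is_derive f' y (f'' y).
Proof.
  rewrite f''_PSeries. apply (is_derive_ext (PSeries (PS_derive f_coef))).
  - intro z. symmetry. apply f'_PSeries.
  - apply is_derive_PSeries_entire, CV_radius_PS_derive_entire, CV_radius_f_coef.
Qed.

Lemma ex_derive_f'' (y : R) : ex_derive f'' y.
Proof.
  exists (PSeries (PS_derive (PS_derive (PS_derive f_coef))) y).
  apply (is_derive_ext (PSeries (PS_derive (PS_derive f_coef)))).
  - intro z. symmetry. apply f''_PSeries.
  - apply is_derive_PSeries_entire.
    do 2 apply CV_radius_PS_derive_entire. exact CV_radius_f_coef.
Qed.

Lemma continuous_f (y : R) : continuous f y.
Proof. apply (ex_derive_continuous (V := R_NormedModule)). exists (f' y). apply is_derive_f. Qed.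

Lemma continuous_f' (y : R) : continuous f' y.
Proof. apply (ex_derive_continuous (V := R_NormedModule)). exists (f'' y). apply is_derive_f'. Qed.

Lemma continuous_f'' (y : R) : continuous f'' y.
Proof. apply (ex_derive_continuous (V := R_NormedModule)), ex_derive_f''. Qed.

Lemma f_0 : f 0 = 1.
Proof. unfold f. rewrite PSeries_0. unfold f_coef. simpl. field. Qed.

Lemma f_ode (y : R) : y * f'' y + f' y + / 16 * f y = 0.
Proof.
  set (a := f_coef). set (a1 := PS_derive a). set (a2 := PS_derive a1).
  assert (Ha : CV_radius a = p_infty) by exact CV_radius_f_coef.
  assert (Ha1 : CV_radius a1 = p_infty) by (apply CV_radius_PS_derive_entire, Ha).
  assert (Ha2 : CV_radius a2 = p_infty) by (apply CV_radius_PS_derive_entire, Ha1).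
  rewrite f''_PSeries, f'_PSeries. fold a a1 a2. unfold f. fold a.
  assert (E2 : ex_pseries (PS_incr_1 a2) y)
    by (apply (ex_pseries_incr_1 (V := R_NormedModule)), ex_pseries_entire, Ha2).
  assert (E1 : ex_pseries a1 y) by (apply ex_pseries_entire, Ha1).
  assert (E0 : ex_pseries (PS_scal (/ 16) a) y).
  { apply (ex_pseries_scal (V := R_NormedModule)); [apply Rmult_comm |].
    apply ex_pseries_entire, Ha. }
  rewrite <- PSeries_incr_1, <- PSeries_scal, <- PSeries_plus by assumption.
  assert (E21 : ex_pseries (PS_plus (PS_incr_1 a2) a1) y)
    by (apply (ex_pseries_plus (V := R_NormedModule)); assumption).
  rewrite <- PSeries_plus by assumption.
  rewrite <- (PSeries_const_0 y). apply PSeries_ext. intro n.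
  unfold PS_plus, PS_scal, PS_incr_1, a2, a1, PS_derive.
  change plus with Rplus. change scal with Rmult.
  destruct n as [| n].
  - change zero with 0. unfold a. rewrite f_coef_S. unfold f_coef. simpl. field.
  - unfold a. rewrite (f_coef_S (S n)), (S_INR (S n)).
    assert (0 < INR (S n)) by (apply lt_0_INR; lia).
    field. lra.
Qed.

(** * Functions of two variables *)

Lemma continuity_2d_pt_comp (h : R -> R) (g : R -> R -> R) (x y : R) :
  continuous h (g x y) -> continuity_2d_pt g x y ->
  continuity_2d_pt (fun u v => h (g u v)) x y.
Proof. intros Hh Hg. apply continuity_1d_2d_pt_comp; [apply continuity_pt_filterlim |]; assumption. Qed.

Lemma continuity_2d_pt_comp2 (P a b : R -> R -> R) (x y : R) :
  continuity_2d_pt P (a x y) (b x y) -> continuity_2d_pt a x y -> continuity_2d_pt b x y ->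
  continuity_2d_pt (fun u v => P (a u v) (b u v)) x y.
Proof.
  intros HP Ha Hb eps.
  destruct (HP eps) as [d Hd]. destruct (Ha d) as [da Hda]. destruct (Hb d) as [db Hdb].
  exists (mkposreal _ (Rmin_stable_in_posreal da db)). simpl. intros u v Hu Hv.
  pose proof (Rmin_l da db). pose proof (Rmin_r da db).
  apply Hd; [apply Hda | apply Hdb]; lra.
Qed.

Lemma continuity_2d_pt_pow (g : R -> R -> R) (n : nat) (x y : R) :
  continuity_2d_pt g x y -> continuity_2d_pt (fun u v => g u v ^ n) x y.
Proof.
  intros Hg. induction n as [| n IH]; simpl.
  - apply continuity_2d_pt_const.
  - apply continuity_2d_pt_mult; assumption.
Qed.

Lemma continuity_2d_pt_l (h : R -> R) (x y : R) :
  continuous h x -> continuity_2d_pt (fun u _ => h u) x y.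
Proof. intros Hh. apply (continuity_2d_pt_comp h (fun u _ => u)), continuity_2d_pt_id1. exact Hh. Qed.

Lemma continuity_2d_pt_r (h : R -> R) (x y : R) :
  continuous h y -> continuity_2d_pt (fun _ v => h v) x y.
Proof. intros Hh. apply (continuity_2d_pt_comp h (fun _ v => v)), continuity_2d_pt_id2. exact Hh. Qed.

Lemma continuity_2d_pt_continuous_l (g : R -> R -> R) (x y : R) :
  continuity_2d_pt g x y -> continuous (fun t => g t y) x.
Proof.
  intros Hg. apply filterlim_locally. intro eps.
  destruct (Hg eps) as [d Hd]. exists d. intros t Ht.
  apply Hd; [exact Ht |]. rewrite Rminus_eq_0, Rabs_R0. apply cond_pos.
Qed.

Lemma continuity_2d_pt_continuous_r (g : R -> R -> R) (x y : R) :
  continuity_2d_pt g x y -> continuous (fun t => g x t) y.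
Proof.
  intros Hg. apply filterlim_locally. intro eps.
  destruct (Hg eps) as [d Hd]. exists d. intros t Ht.
  apply Hd; [| exact Ht]. rewrite Rminus_eq_0, Rabs_R0. apply cond_pos.
Qed.

Lemma continuous_Rmult (g h : R -> R) (u : R) :
  continuous g u -> continuous h u -> continuous (fun y => g y * h y) u.
Proof. apply (continuous_mult (K := R_AbsRing)). Qed.

Lemma continuous_continuity_2d_pt_comp (G : R -> R -> R) (p q : R -> R) (x : R) :
  continuity_2d_pt G (p x) (q x) -> continuous p x -> continuous q x ->
  continuous (fun t => G (p t) (q t)) x.
Proof.
  intros HG Hp Hq. apply (continuity_2d_pt_continuous_l (fun u _ => G (p u) (q u)) x 0).
  apply (continuity_2d_pt_comp2 G (fun u _ => p u) (fun u _ => q u)); [exact HG | |];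
    apply continuity_2d_pt_l; assumption.
Qed.

Lemma differentiable_pt_lim_partials (P : R -> R -> R) (x y : R) :
  (forall u v, ex_derive (fun t => P t v) u) ->
  ex_derive (fun t => P x t) y ->
  continuity_2d_pt (dR P) x y -> differentiable_pt_lim P x y (dR P x y) (du P x y).
Proof.
  intros HR Hu Hc eps.
  assert (He2 : 0 < eps / 2) by (destruct eps; simpl; lra).
  destruct (Hc (mkposreal _ He2)) as [d1 Hd1]. simpl in Hd1.
  destruct (proj1 (is_derive_Reals _ _ _) (Derive_correct _ _ Hu) _ He2) as [d2 Hd2].
  exists (mkposreal _ (Rmin_stable_in_posreal d1 d2)). simpl. intros u v Hu' Hv'.
  pose proof (Rmin_l d1 d2). pose proof (Rmin_r d1 d2).
  set (l1 := dR P x y). set (l2 := du P x y).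
  assert (Bu : Rabs (P u v - P x v - l1 * (u - x)) <= eps / 2 * Rabs (u - x)).
  { destruct (MVT_gen (fun t => P t v) x u (fun t => Derive (fun z => P z v) t)) as [c [Hc1 Hc2]].
    - intros; apply Derive_correct, HR.
    - intros t _. apply continuity_pt_filterlim.
      apply (ex_derive_continuous (V := R_NormedModule) (fun t => P t v)), HR.
    - simpl in Hc2. rewrite Hc2, <- Rmult_minus_distr_r, Rabs_mult.
      apply Rmult_le_compat_r; [apply Rabs_pos |]. apply Rlt_le, Hd1; [| lra].
      unfold Rmin, Rmax in Hc1. destruct (Rle_dec x u); unfold Rabs in *;
        repeat destruct Rcase_abs; lra. }
  assert (Bv : Rabs (P x v - P x y - l2 * (v - y)) <= eps / 2 * Rabs (v - y)).
  { destruct (Req_dec v y) as [-> | Hvy].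
    - rewrite !Rminus_eq_0, Rmult_0_r, Rminus_0_r, Rabs_R0. lra.
    - assert (Hh : v - y <> 0) by lra.
      assert (Hvd : Rabs (v - y) < d2) by lra.
      specialize (Hd2 (v - y) Hh Hvd). replace (y + (v - y)) with v in Hd2 by ring.
      replace (P x v - P x y - l2 * (v - y)) with (((P x v - P x y) / (v - y) - l2) * (v - y))
        by (field; exact Hh).
      rewrite Rabs_mult. apply Rmult_le_compat_r; [apply Rabs_pos | apply Rlt_le, Hd2]. }
  replace (P u v - P x y - (l1 * (u - x) + l2 * (v - y)))
    with ((P u v - P x v - l1 * (u - x)) + (P x v - P x y - l2 * (v - y))) by ring.
  pose proof (Rabs_triang (P u v - P x v - l1 * (u - x)) (P x v - P x y - l2 * (v - y))).
  pose proof (Rmax_l (Rabs (u - x)) (Rabs (v - y))). pose proof (Rmax_r (Rabs (u - x)) (Rabs (v - y))).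
  pose proof (cond_pos eps). nra.
Qed.

Definition C1_2d (P : R -> R -> R) : Prop := forall x y,
  ex_derive (fun t => P t y) x /\ ex_derive (fun t => P x t) y /\
  continuity_2d_pt P x y /\ continuity_2d_pt (dR P) x y /\ continuity_2d_pt (du P) x y.

Lemma continuity_2d_pt_C1_2d (G : R -> R -> R) : C1_2d G -> forall u v, continuity_2d_pt G u v.
Proof. intros HG u v. exact (proj1 (proj2 (proj2 (HG u v)))). Qed.

Lemma continuity_2d_pt_dR_C1_2d (G : R -> R -> R) :
  C1_2d G -> forall u v, continuity_2d_pt (dR G) u v.
Proof. intros HG u v. exact (proj1 (proj2 (proj2 (proj2 (HG u v))))). Qed.

Lemma continuity_2d_pt_du_C1_2d (G : R -> R -> R) :
  C1_2d G -> forall u v, continuity_2d_pt (du G) u v.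
Proof. intros HG u v. exact (proj2 (proj2 (proj2 (proj2 (HG u v))))). Qed.

Lemma is_derive_C1_2d_comp (P : R -> R -> R) (p q : R -> R) (x dp dq : R) :
  C1_2d P -> is_derive p x dp -> is_derive q x dq ->
  is_derive (fun r => P (p r) (q r)) x (dR P (p x) (q x) * dp + du P (p x) (q x) * dq).
Proof.
  intros HP Hp Hq. apply is_derive_Reals, derivable_pt_lim_comp_2d;
    [| apply is_derive_Reals; assumption ..].
  apply differentiable_pt_lim_partials.
  - intros u v. exact (proj1 (HP u v)).
  - exact (proj1 (proj2 (HP _ _))).
  - apply continuity_2d_pt_dR_C1_2d, HP.
Qed.

Lemma is_derive_C1_2d_comp_r (P : R -> R -> R) (x : R) (q : R -> R) (t dq : R) :
  C1_2d P -> is_derive q t dq -> is_derive (fun z => P x (q z)) t (du P x (q t) * dq).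
Proof.
  intros HP Hq. rewrite Rmult_comm.
  apply (is_derive_comp (fun z => P x z) q); [apply Derive_correct, HP | exact Hq].
Qed.

Lemma is_derive_Rmult (g h : R -> R) (x dg dh : R) :
  is_derive g x dg -> is_derive h x dh -> is_derive (fun r => g r * h r) x (dg * h x + g x * dh).
Proof. intros Hg Hh. apply (is_derive_mult (K := R_AbsRing)); [exact Hg | exact Hh | apply Rmult_comm]. Qed.

Lemma is_lim_derivable (g : R -> R) (x l : R) : (forall y, ex_derive g y) -> g x = l -> is_lim g x l.
Proof.
  intros Hg <-.
  apply is_lim_continuity, continuity_pt_filterlim, (ex_derive_continuous (V := R_NormedModule)), Hg.
Qed.

Section Lines.
Variable s : R.

Lemma continuity_2d_pt_line (G : R -> R -> R) (x t : R) :
  (forall u v, continuity_2d_pt G u v) -> continuity_2d_pt (fun r t => G r (s + r * t)) x t.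
Proof.
  intros HG. apply (continuity_2d_pt_comp2 G (fun u _ => u) (fun u v => s + u * v)).
  - apply HG.
  - apply continuity_2d_pt_id1.
  - apply continuity_2d_pt_plus, continuity_2d_pt_mult;
      auto using continuity_2d_pt_const, continuity_2d_pt_id1, continuity_2d_pt_id2.
Qed.

Lemma is_derive_line_R (G : R -> R -> R) (t x : R) : C1_2d G ->
  is_derive (fun r => G r (s + r * t)) x (dR G x (s + x * t) + t * du G x (s + x * t)).
Proof.
  intros HG.
  replace (dR G x (s + x * t) + t * du G x (s + x * t))
    with (dR G x (s + x * t) * 1 + du G x (s + x * t) * t) by ring.
  apply (is_derive_C1_2d_comp G (fun r => r) (fun r => s + r * t)); [exact HG | |].
  - apply (is_derive_id (K := R_AbsRing)).
  - auto_derive; [exact I | ring].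
Qed.

Lemma is_derive_line_t (G : R -> R -> R) (x t : R) : C1_2d G ->
  is_derive (fun t => G x (s + x * t)) t (x * du G x (s + x * t)).
Proof.
  intros HG. rewrite Rmult_comm. apply (is_derive_C1_2d_comp_r G x (fun t => s + x * t)); [exact HG |].
  auto_derive; [exact I | ring].
Qed.

End Lines.

(** * Integrals *)

(* Instances at [V := R] of Coquelicot's normed-module lemmas, whose generic statements
   do not unify with goals written with [Rplus] and [Rmult]. *)
Lemma RInt_ext_R (g h : R -> R) (a b : R) : (forall t, g t = h t) -> RInt g a b = RInt h a b.
Proof. intros E. apply RInt_ext. intros t _. apply E. Qed.

Lemma is_RInt_plus_R (g h : R -> R) (a b Ig Ih : R) :
  is_RInt g a b Ig -> is_RInt h a b Ih -> is_RInt (fun t => g t + h t) a b (Ig + Ih).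
Proof. apply (is_RInt_plus (V := R_NormedModule)). Qed.

Lemma is_RInt_ext_R (g h : R -> R) (a b l : R) :
  (forall t, g t = h t) -> is_RInt g a b l -> is_RInt h a b l.
Proof. intros E. apply (is_RInt_ext (V := R_NormedModule)). intros t _. apply E. Qed.

Lemma RInt_plus_R (g h : R -> R) (a b : R) : ex_RInt g a b -> ex_RInt h a b ->
  RInt (fun t => g t + h t) a b = RInt g a b + RInt h a b.
Proof. apply (RInt_plus (V := R_CompleteNormedModule)). Qed.

Lemma RInt_minus_R (g h : R -> R) (a b : R) : ex_RInt g a b -> ex_RInt h a b ->
  RInt (fun t => g t - h t) a b = RInt g a b - RInt h a b.
Proof. apply (RInt_minus (V := R_CompleteNormedModule)). Qed.

Lemma ex_RInt_continuity_2d_r (G : R -> R -> R) (x a b : R) :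
  (forall u v, continuity_2d_pt G u v) -> ex_RInt (fun t => G x t) a b.
Proof.
  intros HG. apply (ex_RInt_continuous (V := R_CompleteNormedModule)). intros z _.
  apply continuity_2d_pt_continuous_r, HG.
Qed.

Lemma is_RInt_derive_R (F dF : R -> R) (a b : R) :
  (forall t, is_derive F t (dF t)) -> (forall t, continuous dF t) -> is_RInt dF a b (F b - F a).
Proof. intros HF HdF. apply (is_RInt_derive (V := R_CompleteNormedModule)); auto. Qed.

Lemma is_derive_RInt_param_continuous (g dg : R -> R -> R) (a b x : R) :
  (forall u v, is_derive (fun z => g z v) u (dg u v)) ->
  (forall u v, continuity_2d_pt dg u v) -> (forall u v, continuity_2d_pt g u v) ->
  is_derive (fun r => RInt (fun t => g r t) a b) x (RInt (fun t => dg x t) a b).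
Proof.
  intros Hd Hdc Hc.
  assert (E : forall u v, Derive (fun z => g z v) u = dg u v) by (intros; apply is_derive_unique, Hd).
  rewrite <- (RInt_ext (fun t => Derive (fun z => g z t) x)) by (intros; apply E).
  apply is_derive_RInt_param.
  - apply filter_forall. intros. exists (dg x0 t). apply Hd.
  - intros t _. apply (continuity_2d_pt_ext dg); [intros; symmetry; apply E | apply Hdc].
  - apply filter_forall. intros. apply ex_RInt_continuity_2d_r, Hc.
Qed.

Lemma continuous_RInt_param (g : R -> R -> R) (a b x : R) : a <= b ->
  (forall u v, continuity_2d_pt g u v) -> continuous (fun r => RInt (fun t => g r t) a b) x.
Proof.
  intros Hab Hg. apply filterlim_locally. intro eps.
  set (e := eps / (b - a + 1)).
  assert (He : 0 < e) by (apply Rdiv_lt_0_compat; [apply cond_pos | lra]).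
  destruct (uniform_continuity_2d_1d' g a b x (fun t _ => Hg x t) (mkposreal _ He)) as [d Hd].
  exists d. intros r Hr. change (Rabs (r - x) < d) in Hr.
  change (Rabs (RInt (fun t => g r t) a b - RInt (fun t => g x t) a b) < eps).
  rewrite <- (RInt_minus (V := R_CompleteNormedModule)) by (apply ex_RInt_continuity_2d_r, Hg).
  apply Rle_lt_trans with ((b - a) * e).
  - apply (abs_RInt_le_const (fun t => g r t - g x t)); [exact Hab | |].
    + apply (ex_RInt_minus (V := R_CompleteNormedModule)); apply ex_RInt_continuity_2d_r, Hg.
    + intros t Ht. apply Rlt_le. pose proof (cond_pos d).
      assert (Hrx : x - d <= r <= x + d) by (unfold Rabs in Hr; destruct Rcase_abs; lra).
      apply (Hd t x t r); try lra. rewrite Rminus_eq_0, Rabs_R0. lra.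
  - assert (Ee : e * (b - a + 1) = eps) by (unfold e; field; lra). clearbody e. nra.
Qed.

Lemma int_R_ext (g h : R -> R) : (forall u, g u = h u) -> int_R g = int_R h.
Proof. intros E. f_equal. apply functional_extensionality, E. Qed.

Lemma is_RInt_gen_compact (g h : R -> R) (a b l : R) : a <= b ->
  (forall u, u < a \/ b < u -> g u = 0) -> (forall u, a < u < b -> g u = h u) ->
  is_RInt h a b l -> is_RInt_gen g (Rbar_locally m_infty) (Rbar_locally p_infty) l.
Proof.
  intros Hab Hout Hin Hh P HP.
  exists (fun x => x < a) (fun y => b < y); [exists a; auto | exists b; auto |].
  intros x y Hx Hy. exists l. split; [| apply locally_singleton, HP]. simpl.
  assert (Hzero : forall c d, c <= d -> (forall u, c < u < d -> g u = 0) -> is_RInt g c d 0).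
  { intros c d Hcd Hg. replace 0 with (scal (d - c) 0) by (unfold scal; simpl; unfold mult; simpl; ring).
    apply (is_RInt_ext (V := R_NormedModule) (fun _ => 0)).
    - intros u Hu. rewrite Rmin_left, Rmax_right in Hu by lra. symmetry. apply Hg, Hu.
    - apply (is_RInt_const (V := R_NormedModule)). }
  replace l with (plus (plus 0 l) 0) by (unfold plus; simpl; ring).
  apply (is_RInt_Chasles (V := R_NormedModule)) with b;
    [apply (is_RInt_Chasles (V := R_NormedModule)) with a |].
  - apply Hzero; [lra |]. intros u Hu. apply Hout. lra.
  - apply (is_RInt_ext (V := R_NormedModule) h); [| exact Hh].
    intros u Hu. rewrite Rmin_left, Rmax_right in Hu by lra. symmetry. apply Hin, Hu.
  - apply Hzero; [lra |]. intros u Hu. apply Hout. lra.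
Qed.

Lemma int_R_compact (g h : R -> R) (a b l : R) : a <= b ->
  (forall u, u < a \/ b < u -> g u = 0) -> (forall u, a < u < b -> g u = h u) ->
  is_RInt h a b l -> int_R g = l.
Proof. intros. unfold int_R. apply is_RInt_gen_unique. eapply is_RInt_gen_compact; eauto. Qed.

Lemma int_R_derive_compact (G g : R -> R) (M : R) :
  (forall x, is_derive G x (g x)) -> (forall x, continuous g x) ->
  (forall x, M < Rabs x -> G x = 0) -> int_R g = 0.
Proof.
  intros Hd Hc Hs. unfold int_R.
  replace g with (Derive G) by (apply functional_extensionality; intro; apply is_derive_unique, Hd).
  apply is_RInt_gen_unique. replace 0 with (0 - 0) by ring.
  pose proof (Rabs_pos M).
  apply is_RInt_gen_Derive.
  - apply filter_forall. intros _ y _. exists (g y). apply Hd.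
  - apply filter_forall. intros ab y _.
    apply (continuous_ext g); [intro; symmetry; apply is_derive_unique, Hd | apply Hc].
  - apply filterlim_ext_loc with (fun _ => 0); [| apply filterlim_const].
    exists (- Rabs M - 1). intros x Hx. symmetry. apply Hs.
    rewrite Rabs_left by lra. unfold Rabs at 1 in Hx. destruct Rcase_abs; lra.
  - apply filterlim_ext_loc with (fun _ => 0); [| apply filterlim_const].
    exists (Rabs M + 1). intros x Hx. symmetry. apply Hs.
    rewrite Rabs_right by lra. unfold Rabs at 1 in Hx. destruct Rcase_abs; lra.
Qed.

Lemma ind_cone_in (x v : R) : Rabs v < Rabs x -> ind_cone x v = 1.
Proof. intros H. unfold ind_cone. destruct Rlt_dec; [reflexivity | contradiction]. Qed.

Lemma ind_cone_out (x v : R) : ~ Rabs v < Rabs x -> ind_cone x v = 0.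
Proof. intros H. unfold ind_cone. destruct Rlt_dec; [contradiction | reflexivity]. Qed.

Lemma sgn_pos (x : R) : 0 < x -> sgn x = 1.
Proof. intros H. unfold sgn. destruct Rlt_dec; [reflexivity | lra]. Qed.

Lemma sgn_neg (x : R) : x < 0 -> sgn x = -1.
Proof. intros H. unfold sgn. do 2 (destruct Rlt_dec; try lra). Qed.

Lemma RInt_comp_line (K : R -> R) (s x : R) : (forall u, continuous K u) ->
  x * RInt (fun t => K (s + x * t)) (-1) 1 = RInt K (s - x) (s + x).
Proof.
  intros HK.
  assert (Hlin : is_RInt (fun t => x * K (s + x * t)) (-1) 1 (RInt K (s - x) (s + x))).
  { apply (is_RInt_ext (V := R_NormedModule) (fun t => scal x (K (x * t + s)))).
    { intros t _. unfold scal; simpl; unfold mult; simpl. do 2 f_equal. ring. }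
    apply (is_RInt_comp_lin (V := R_NormedModule)).
    replace (x * -1 + s) with (s - x) by ring. replace (x * 1 + s) with (s + x) by ring.
    apply (RInt_correct (V := R_CompleteNormedModule)), (ex_RInt_continuous (V := R_CompleteNormedModule)).
    intros; apply HK. }
  rewrite <- (is_RInt_unique _ _ _ _ Hlin). symmetry.
  apply (RInt_scal (V := R_CompleteNormedModule) (fun t => K (s + x * t))).
  apply (ex_RInt_continuous (V := R_CompleteNormedModule)). intros z _.
  apply (continuous_comp (fun t => s + x * t) K); [| apply HK].
  apply (ex_derive_continuous (V := R_NormedModule)). auto_derive. exact I.
Qed.

(* The oriented integral [RInt K (s - x) (s + x)] absorbs the sign of [x]. *)
Lemma int_R_cone (K : R -> R) (s x : R) : (forall u, continuous K u) ->
  int_R (fun u => sgn x * K u * ind_cone x (u - s)) = RInt K (s - x) (s + x).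
Proof.
  intros HK.
  assert (ExK : forall a b, ex_RInt K a b)
    by (intros; apply (ex_RInt_continuous (V := R_CompleteNormedModule)); intros; apply HK).
  assert (Hout : forall u, u < s - Rabs x \/ s + Rabs x < u -> ind_cone x (u - s) = 0).
  { intros u Hu. apply ind_cone_out. unfold Rabs at 1. destruct Rcase_abs; lra. }
  assert (Hin : forall u, s - Rabs x < u < s + Rabs x -> ind_cone x (u - s) = 1).
  { intros u Hu. apply ind_cone_in. unfold Rabs at 1. destruct Rcase_abs; lra. }
  destruct (Rlt_dec 0 x) as [Hp | Hnp]; [| destruct (Rlt_dec x 0) as [Hn | Hz]].
  - rewrite Rabs_right in Hout, Hin by lra.
    apply int_R_compact with K (s - x) (s + x); [lra | | |].
    + intros u Hu. rewrite Hout by exact Hu. ring.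
    + intros u Hu. rewrite Hin, sgn_pos by assumption. ring.
    + apply (RInt_correct (V := R_CompleteNormedModule)), ExK.
  - rewrite Rabs_left in Hout, Hin by lra.
    apply int_R_compact with (fun u => - K u) (s + x) (s - x); [lra | | |].
    + intros u Hu. rewrite Hout by lra. ring.
    + intros u Hu. rewrite Hin, sgn_neg by lra. ring.
    + rewrite <- (opp_RInt_swap (V := R_CompleteNormedModule)) by apply ExK.
      apply (is_RInt_opp (V := R_NormedModule)), (RInt_correct (V := R_CompleteNormedModule)), ExK.
  - replace x with 0 in * by lra. rewrite Rabs_R0 in Hout.
    apply int_R_compact with K s s; [lra | | intros; lra |].
    + intros u Hu. rewrite Hout by lra. ring.
    + replace (s - 0) with s by ring. replace (s + 0) with s by ring.
      apply (RInt_correct (V := R_CompleteNormedModule)), ExK.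
Qed.

Lemma bounded_compact_support (psi : R -> R) (M : R) : (forall u, continuous psi u) ->
  (forall u, M < Rabs u -> psi u = 0) -> exists B, 0 <= B /\ forall u, Rabs (psi u) <= B.
Proof.
  intros Hc Hs. pose proof (Rabs_pos M).
  destruct (continuous_ab_maj_consistent (fun u => Rabs (psi u)) (- Rabs M) (Rabs M))
    as [m [Hm _]]; [lra | intros; apply continuous_Rabs_comp, Hc |].
  exists (Rabs (psi m)). split; [apply Rabs_pos |]. intro u.
  destruct (Rle_dec (Rabs u) (Rabs M)) as [Hu | Hu].
  - apply Hm. unfold Rabs in *. repeat destruct Rcase_abs; lra.
  - rewrite Hs, Rabs_R0 by (unfold Rabs in *; repeat destruct Rcase_abs; lra). apply Rabs_pos.
Qed.

Lemma RInt_zero_on (g : R -> R) (a b : R) : a <= b -> (forall t, a < t < b -> g t = 0) ->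
  RInt g a b = 0.
Proof.
  intros Hab H. rewrite (RInt_ext g (fun _ => 0)).
  - rewrite (RInt_const (V := R_CompleteNormedModule)). unfold scal; simpl; unfold mult; simpl. ring.
  - intros t Ht. rewrite Rmin_left, Rmax_right in Ht by lra. apply H, Ht.
Qed.

(** * The kernels on the cone [u = s + R t], [-1 < t < 1] *)

Definition amp (x : R) : R := / 2 * exp (x / 2).

(* [(u - s) ^ 2 - R ^ 2] at [u = s + R t]. *)
Definition cone_arg (x t : R) : R := x ^ 2 * (t ^ 2 - 1).

(* On the cone, [chi_sharp(R, u - s) = sgn R * ker_sharp R t] and the density of
   [chi_sharp_R(R, u - s)] is [sgn R * ker_dsharp R t]. *)
Definition ker_sharp (x t : R) : R := amp x * f (cone_arg x t).
Definition ker_sharp_R (x t : R) : R :=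
  amp x * (/ 2 * f (cone_arg x t) + 2 * x * (t ^ 2 - 1) * f' (cone_arg x t)).
Definition ker_sharp_t (x t : R) : R := amp x * (2 * x ^ 2 * t * f' (cone_arg x t)).
Definition ker_dsharp (x t : R) : R :=
  amp x * (/ 2 * f (cone_arg x t) - 2 * x * f' (cone_arg x t)).
Definition ker_dsharp_R (x t : R) : R :=
  amp x * (/ 2 * (/ 2 * f (cone_arg x t) - 2 * x * f' (cone_arg x t))
           + x * (t ^ 2 - 1) * f' (cone_arg x t) - 2 * f' (cone_arg x t)
           - 4 * x ^ 2 * (t ^ 2 - 1) * f'' (cone_arg x t)).

Lemma is_derive_amp (x : R) : is_derive amp x (amp x / 2).
Proof. unfold amp. auto_derive; [exact I | unfold Rdiv; ring]. Qed.

Lemma amp_0 : amp 0 = / 2.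
Proof. unfold amp. replace (0 / 2) with 0 by field. rewrite exp_0. ring. Qed.

Lemma is_derive_cone_arg_R (x t : R) : is_derive (fun r => cone_arg r t) x (2 * x * (t ^ 2 - 1)).
Proof. unfold cone_arg. auto_derive; [exact I | ring]. Qed.

Lemma is_derive_cone_arg_t (x t : R) : is_derive (fun z => cone_arg x z) t (2 * x ^ 2 * t).
Proof. unfold cone_arg. auto_derive; [exact I | ring]. Qed.

Ltac kernel_derive :=
  unfold ker_sharp, ker_sharp_R, ker_sharp_t, ker_dsharp, ker_dsharp_R, amp; auto_derive;
  [ repeat match goal with
    | |- _ /\ _ => split
    | |- True => exact I
    | |- ex_derive (fun z => f z) ?y => exists (f' y); apply is_derive_f
    | |- ex_derive (fun z => f' z) ?y => exists (f'' y); apply is_derive_f'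
    | |- ex_derive (fun z => cone_arg z ?t) ?x => eexists; apply is_derive_cone_arg_R
    | |- ex_derive (fun z => cone_arg ?x z) ?t => eexists; apply is_derive_cone_arg_t
    end
  | change (fun z : R => f z) with f; change (fun z : R => f' z) with f';
    change (Derive f) with f'; change (Derive f') with f'';
    rewrite ?(is_derive_unique _ _ _ (is_derive_cone_arg_R _ _)),
            ?(is_derive_unique _ _ _ (is_derive_cone_arg_t _ _));
    unfold Rdiv; field ].

Lemma is_derive_ker_sharp_R (x t : R) : is_derive (fun r => ker_sharp r t) x (ker_sharp_R x t).
Proof. kernel_derive. Qed.

Lemma is_derive_ker_sharp_t (x t : R) : is_derive (fun z => ker_sharp x z) t (ker_sharp_t x t).
Proof. kernel_derive. Qed.

Lemma is_derive_ker_dsharp_R (x t : R) : is_derive (fun r => ker_dsharp r t) x (ker_dsharp_R x t).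
Proof. kernel_derive. Qed.

Lemma continuity_2d_pt_amp (x t : R) : continuity_2d_pt (fun u _ => amp u) x t.
Proof.
  apply continuity_2d_pt_l, (ex_derive_continuous (V := R_NormedModule)).
  exists (amp x / 2). apply is_derive_amp.
Qed.

Lemma continuity_2d_pt_comp_cone_arg (h : R -> R) (x t : R) :
  (forall y, continuous h y) -> continuity_2d_pt (fun u v => h (cone_arg u v)) x t.
Proof.
  intros Hh. apply continuity_2d_pt_comp; [apply Hh |]. unfold cone_arg.
  apply continuity_2d_pt_mult; [| apply continuity_2d_pt_minus];
    auto using continuity_2d_pt_pow, continuity_2d_pt_id1, continuity_2d_pt_id2,
      continuity_2d_pt_const.
Qed.

Ltac cont2d := repeat first
  [ match goal with H : forall u v, continuity_2d_pt _ u v |- _ => apply H end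
  | progress unfold ker_sharp, ker_sharp_R, ker_sharp_t, ker_dsharp, ker_dsharp_R
  | apply continuity_2d_pt_amp
  | apply continuity_2d_pt_comp_cone_arg;
    solve [auto using continuous_f, continuous_f', continuous_f'']
  | apply continuity_2d_pt_line; solve [intros; cont2d]
  | apply continuity_2d_pt_plus | apply continuity_2d_pt_minus
  | apply continuity_2d_pt_mult | apply continuity_2d_pt_opp | apply continuity_2d_pt_pow
  | apply continuity_2d_pt_id1 | apply continuity_2d_pt_id2 | apply continuity_2d_pt_const ].

Lemma continuity_2d_pt_ker_sharp (x t : R) : continuity_2d_pt ker_sharp x t.
Proof. cont2d. Qed.
Lemma continuity_2d_pt_ker_sharp_R (x t : R) : continuity_2d_pt ker_sharp_R x t.
Proof. cont2d. Qed.
Lemma continuity_2d_pt_ker_dsharp (x t : R) : continuity_2d_pt ker_dsharp x t.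
Proof. cont2d. Qed.
Lemma continuity_2d_pt_ker_dsharp_R (x t : R) : continuity_2d_pt ker_dsharp_R x t.
Proof. cont2d. Qed.

Definition cone_int (K : R -> R -> R) (s x : R) (psi : R -> R) : R :=
  x * RInt (fun t => K x t * psi (s + x * t)) (-1) 1.

Section ConeIntegral.
Variables (K : R -> R -> R) (s : R).
Hypothesis K_cont : forall u v, continuity_2d_pt K u v.

Lemma cone_int_ext (x : R) (p q : R -> R) :
  (forall u, p u = q u) -> cone_int K s x p = cone_int K s x q.
Proof. intros E. unfold cone_int. f_equal. apply RInt_ext. intros t _. rewrite E. reflexivity. Qed.

Lemma cone_int_0_l (psi : R -> R) : cone_int K s 0 psi = 0.
Proof. unfold cone_int. ring. Qed.

Lemma cone_int_0_r (x : R) : cone_int K s x (fun _ => 0) = 0.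
Proof.
  unfold cone_int. rewrite (RInt_ext_R _ (fun _ => 0)) by (intros; ring).
  rewrite (RInt_const (V := R_CompleteNormedModule)). unfold scal; simpl; unfold mult; simpl. ring.
Qed.

Lemma ex_RInt_cone (G : R -> R -> R) (x a b : R) : (forall u v, continuity_2d_pt G u v) ->
  ex_RInt (fun t => K x t * G x (s + x * t)) a b.
Proof. intros HG. apply (ex_RInt_continuity_2d_r (fun x t => K x t * G x (s + x * t))). intros; cont2d. Qed.

Lemma cone_int_RInt (G : R -> R -> R) (x : R) : (forall u v, continuity_2d_pt G u v) ->
  cone_int K s x (G x) = RInt (fun t => x * K x t * G x (s + x * t)) (-1) 1.
Proof.
  intros HG. unfold cone_int. rewrite <- (RInt_scal (V := R_CompleteNormedModule)) by (apply ex_RInt_cone, HG).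
  apply RInt_ext. intros t _. unfold scal; simpl; unfold mult; simpl. ring.
Qed.

Lemma is_RInt_cone_int (G : R -> R -> R) (x : R) : (forall u v, continuity_2d_pt G u v) ->
  is_RInt (fun t => x * K x t * G x (s + x * t)) (-1) 1 (cone_int K s x (G x)).
Proof.
  intros HG. rewrite cone_int_RInt by exact HG.
  apply (RInt_correct (V := R_CompleteNormedModule)).
  apply (ex_RInt_continuity_2d_r (fun x t => x * K x t * G x (s + x * t))). intros; cont2d.
Qed.

Lemma cone_int_lin (a b c : R -> R -> R) (x : R) :
  (forall u v, continuity_2d_pt a u v) -> (forall u v, continuity_2d_pt b u v) ->
  (forall u v, continuity_2d_pt c u v) ->
  cone_int K s x (fun y => a x y - b x y + c x y)
  = cone_int K s x (a x) - cone_int K s x (b x) + cone_int K s x (c x).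
Proof.
  intros Ha Hb Hc. unfold cone_int.
  rewrite (RInt_ext_R _ (fun t => (K x t * a x (s + x * t) - K x t * b x (s + x * t))
                               + K x t * c x (s + x * t))) by (intros; ring).
  pose proof (ex_RInt_cone a x (-1) 1 Ha) as Ea. pose proof (ex_RInt_cone b x (-1) 1 Hb) as Eb.
  pose proof (ex_RInt_cone c x (-1) 1 Hc) as Ec.
  rewrite RInt_plus_R, RInt_minus_R; try assumption; [ring |].
  apply (ex_RInt_minus (V := R_CompleteNormedModule)); assumption.
Qed.

Lemma continuous_cone_int (G : R -> R -> R) (x : R) : (forall u v, continuity_2d_pt G u v) ->
  continuous (fun r => cone_int K s r (G r)) x.
Proof.
  intros HG. unfold cone_int.
  apply (continuous_mult (K := R_AbsRing)); [apply continuous_id |].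
  apply (continuous_RInt_param (fun r t => K r t * G r (s + r * t))); [lra |]. intros; cont2d.
Qed.

Lemma is_derive_cone_int (KR G : R -> R -> R) (x : R) :
  (forall u v, is_derive (fun r => K r v) u (KR u v)) -> (forall u v, continuity_2d_pt KR u v) ->
  C1_2d G ->
  is_derive (fun r => cone_int K s r (G r)) x
    (RInt (fun t => (K x t + x * KR x t) * G x (s + x * t)
                    + x * K x t * (dR G x (s + x * t) + t * du G x (s + x * t))) (-1) 1).
Proof.
  intros HK CKR HG.
  pose proof (continuity_2d_pt_C1_2d G HG) as C0.
  pose proof (continuity_2d_pt_dR_C1_2d G HG) as CR.
  pose proof (continuity_2d_pt_du_C1_2d G HG) as Cu.
  apply (is_derive_ext (fun r => RInt (fun t => r * K r t * G r (s + r * t)) (-1) 1)).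
  { intro r. symmetry. apply cone_int_RInt, C0. }
  set (dg := fun r t => (1 * K r t + r * KR r t) * G r (s + r * t)
                         + r * K r t * (dR G r (s + r * t) + t * du G r (s + r * t))).
  rewrite (RInt_ext_R _ (fun t => dg x t)) by (intros; unfold dg; ring).
  apply is_derive_RInt_param_continuous.
  - intros u v. apply (is_derive_Rmult (fun r => r * K r v) (fun r => G r (s + r * v))).
    + apply (is_derive_Rmult (fun r => r) (fun r => K r v)); [apply (is_derive_id (K := R_AbsRing)) | apply HK].
    + apply is_derive_line_R, HG.
  - intros. unfold dg. cont2d.
  - intros. cont2d.
Qed.

(* For [|x| > M + |s|] only [|t| <= (M + |s|) / |x|] meets the support of [psi]. *)
Lemma abs_cone_int_le (psi : R -> R) (x M B Km : R) : 0 <= M ->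
  (forall u, continuous psi u) -> (forall u, Rabs (psi u) <= B) ->
  (forall u, M < Rabs u -> psi u = 0) -> (forall t, -1 <= t <= 1 -> Rabs (K x t) <= Km) ->
  M + Rabs s < Rabs x -> Rabs (cone_int K s x psi) <= 2 * (M + Rabs s) * (Km * B).
Proof.
  intros HM Hpc HB Hs Hk Hx. pose proof (Rabs_pos s).
  set (d := (M + Rabs s) / Rabs x).
  assert (Ed : Rabs x * d = M + Rabs s) by (unfold d; field; lra).
  assert (Hd : 0 <= d < 1).
  { split; [apply Rmult_le_pos; [lra | apply Rlt_le, Rinv_0_lt_compat; lra] |]. nra. }
  set (g := fun t => K x t * psi (s + x * t)).
  assert (Eg : forall a b, ex_RInt g a b).
  { intros. apply (ex_RInt_cone (fun _ => psi)).
    intros. apply continuity_2d_pt_r, Hpc. }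
  assert (Hz : forall t, d < Rabs t -> g t = 0).
  { intros t Ht. unfold g. rewrite (Hs (s + x * t)); [ring |].
    assert (Hxt : M + Rabs s < Rabs (x * t)) by (rewrite Rabs_mult; nra).
    pose proof (Rabs_triang_inv (x * t) (- s)) as Htri.
    rewrite Rabs_Ropp in Htri. replace (x * t - - s) with (s + x * t) in Htri by ring. lra. }
  unfold cone_int. fold g.
  rewrite <- (RInt_Chasles (V := R_CompleteNormedModule) g (-1) (-d) 1),
    <- (RInt_Chasles (V := R_CompleteNormedModule) g (-d) d 1) by apply Eg.
  rewrite (RInt_zero_on g (-1) (-d)), (RInt_zero_on g d 1); try lra.
  2, 3: intros t Ht; apply Hz; unfold Rabs; destruct Rcase_abs; lra.
  unfold plus; simpl. rewrite Rplus_0_l, Rplus_0_r, Rabs_mult.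
  assert (0 <= B) by (specialize (HB 0); pose proof (Rabs_pos (psi 0)); lra).
  assert (Hi : Rabs (RInt g (-d) d) <= (d - - d) * (Km * B)).
  { apply abs_RInt_le_const; [lra | apply Eg |]. intros t Ht. unfold g. rewrite Rabs_mult.
    apply Rmult_le_compat; [apply Rabs_pos | apply Rabs_pos | apply Hk; lra | apply HB]. }
  apply Rle_trans with (Rabs x * ((d - - d) * (Km * B))).
  - apply Rmult_le_compat_l; [apply Rabs_pos | exact Hi].
  - rewrite <- Ed. right. ring.
Qed.

Lemma is_lim_cone_int_m_infty (psi : R -> R) :
  (forall u, continuous psi u) -> (exists M, forall u, M < Rabs u -> psi u = 0) ->
  (forall eps, 0 < eps -> exists A, forall x t, x < A -> -1 <= t <= 1 -> Rabs (K x t) <= eps) ->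
  is_lim (fun x => cone_int K s x psi) m_infty 0.
Proof.
  intros Hc [M HM] HK. apply is_lim_spec. intro eps.
  destruct (bounded_compact_support psi M Hc HM) as [B [HB0 HB]].
  set (M' := Rabs M). pose proof (Rabs_pos M). pose proof (Rabs_pos s). pose proof (cond_pos eps).
  assert (HM' : forall u, M' < Rabs u -> psi u = 0)
    by (intros u Hu; apply HM; unfold M', Rabs at 1 in Hu; destruct Rcase_abs; lra).
  set (C := 2 * (M' + Rabs s + 1) * (B + 1)).
  assert (HC : 0 < C) by (unfold C, M'; nra).
  destruct (HK (eps / C)) as [A HA]; [apply Rdiv_lt_0_compat; lra |].
  exists (Rmin A (- (M' + Rabs s + 1))). intros x Hx. rewrite Rminus_0_r.
  pose proof (Rmin_l A (- (M' + Rabs s + 1))). pose proof (Rmin_r A (- (M' + Rabs s + 1))).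
  eapply Rle_lt_trans.
  { apply (abs_cone_int_le psi x M' B (eps / C)); try assumption.
    - intros t Ht. apply HA; [lra | exact Ht].
    - rewrite (Rabs_left x); unfold M' in *; lra. }
  assert (E : eps / C * C = eps) by (field; lra).
  assert (0 < eps / C) by (apply Rdiv_lt_0_compat; lra).
  set (e := eps / C) in *. clearbody e. rewrite <- E. unfold C, M' in *. nra.
Qed.

End ConeIntegral.

(* Pairings of [chi_sharp(R, . - s)] and of [chi_sharp_R(R, . - s)] with [psi]. *)
Definition sharp_int (s x : R) (psi : R -> R) : R := cone_int ker_sharp s x psi.
Definition dsharp_int (s x : R) (psi : R -> R) : R :=
  amp x * (psi (s + x) + psi (s - x)) + cone_int ker_dsharp s x psi.

Lemma sharp_int_0 (s : R) (p : R -> R) : sharp_int s 0 p = 0.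
Proof. apply cone_int_0_l. Qed.

Lemma dsharp_int_0 (s : R) (p : R -> R) : dsharp_int s 0 p = p s.
Proof.
  unfold dsharp_int. rewrite cone_int_0_l, amp_0.
  replace (s + 0) with s by ring. replace (s - 0) with s by ring. field.
Qed.

Lemma ker_sharp_pm1 (x : R) : ker_sharp x 1 = amp x /\ ker_sharp x (-1) = amp x.
Proof.
  unfold ker_sharp, cone_arg.
  split; (replace (x ^ 2 * (_ ^ 2 - 1)) with 0 by ring); rewrite f_0; ring.
Qed.

Lemma ker_sharp_R_eq (x t : R) : x * ker_sharp_R x t = x * ker_dsharp x t + t * ker_sharp_t x t.
Proof. unfold ker_sharp_R, ker_dsharp, ker_sharp_t. ring. Qed.

Lemma ker_sharp_t_eq (x t : R) :
  ker_sharp_t x t = / 2 * t * x * ker_sharp x t - x * t * ker_dsharp x t.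
Proof. unfold ker_sharp_t, ker_sharp, ker_dsharp. field. Qed.

Lemma ker_dsharp_R_eq (x t : R) :
  ker_dsharp x t + x * ker_dsharp_R x t
  = x * ker_dsharp x t + / 2 * ker_sharp x t + / 2 * t * ker_sharp_t x t.
Proof.
  pose proof (f_ode (cone_arg x t)) as Hode.
  assert (E : 4 * x ^ 2 * (t ^ 2 - 1) * f'' (cone_arg x t)
              = 4 * (- f' (cone_arg x t) - / 16 * f (cone_arg x t)))
    by (unfold cone_arg in *; lra).
  unfold ker_dsharp, ker_dsharp_R, ker_sharp, ker_sharp_t. rewrite E. field.
Qed.

Lemma continuous_dsharp_int (G : R -> R -> R) (s x : R) : (forall u v, continuity_2d_pt G u v) ->
  continuous (fun r => dsharp_int s r (G r)) x.
Proof.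
  intros HG. unfold dsharp_int.
  apply (continuous_plus (V := R_NormedModule) (fun r => amp r * (G r (s + r) + G r (s - r)))).
  - apply (continuous_mult (K := R_AbsRing)).
    + apply (ex_derive_continuous (V := R_NormedModule)). exists (amp x / 2). apply is_derive_amp.
    + apply (continuous_plus (V := R_NormedModule) (fun r => G r (s + r)) (fun r => G r (s - r)));
        apply (continuous_continuity_2d_pt_comp G (fun r => r)); auto using continuous_id;
        apply (ex_derive_continuous (V := R_NormedModule)); auto_derive; exact I.
  - apply continuous_cone_int; [exact continuity_2d_pt_ker_dsharp | exact HG].
Qed.

(* Integration by parts in [t]: the integrand is the [t]-derivative of [t ker_sharp G]. *)
Lemma is_RInt_sharp_boundary (G : R -> R -> R) (s x : R) : C1_2d G ->
  is_RInt (fun t => (ker_sharp x t + t * ker_sharp_t x t) * G x (s + x * t)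
                    + t * ker_sharp x t * (x * du G x (s + x * t))) (-1) 1
    (amp x * (G x (s + x) + G x (s - x))).
Proof.
  intros HG.
  pose proof (continuity_2d_pt_C1_2d G HG) as C0.
  pose proof (continuity_2d_pt_du_C1_2d G HG) as Cu.
  set (F := fun t => t * ker_sharp x t * G x (s + x * t)).
  replace (amp x * (G x (s + x) + G x (s - x))) with (F 1 - F (-1)).
  2: { unfold F. destruct (ker_sharp_pm1 x) as [-> ->].
       replace (s + x * 1) with (s + x) by ring. replace (s + x * -1) with (s - x) by ring. ring. }
  apply is_RInt_derive_R.
  - intro t. unfold F.
    replace ((ker_sharp x t + t * ker_sharp_t x t) * G x (s + x * t)
             + t * ker_sharp x t * (x * du G x (s + x * t)))
      with ((1 * ker_sharp x t + t * ker_sharp_t x t) * G x (s + x * t)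
            + t * ker_sharp x t * (x * du G x (s + x * t))) by ring.
    apply (is_derive_Rmult (fun t => t * ker_sharp x t) (fun t => G x (s + x * t))).
    + apply (is_derive_Rmult (fun t => t) (ker_sharp x));
        [apply (is_derive_id (K := R_AbsRing)) | apply is_derive_ker_sharp_t].
    + apply is_derive_line_t, HG.
  - intro t. apply (continuity_2d_pt_continuous_r (fun x t =>
      (ker_sharp x t + t * ker_sharp_t x t) * G x (s + x * t)
      + t * ker_sharp x t * (x * du G x (s + x * t)))). cont2d.
Qed.

Lemma is_derive_sharp_int (G : R -> R -> R) (s x : R) : C1_2d G ->
  is_derive (fun r => sharp_int s r (G r)) x (dsharp_int s x (G x) + sharp_int s x (dR G x)).
Proof.
  intros HG.
  pose proof (continuity_2d_pt_C1_2d G HG) as C0.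
  pose proof (continuity_2d_pt_dR_C1_2d G HG) as CR.
  replace (dsharp_int s x (G x) + sharp_int s x (dR G x))
    with (RInt (fun t => (ker_sharp x t + x * ker_sharp_R x t) * G x (s + x * t)
           + x * ker_sharp x t * (dR G x (s + x * t) + t * du G x (s + x * t))) (-1) 1).
  { apply is_derive_cone_int; auto using continuity_2d_pt_ker_sharp, continuity_2d_pt_ker_sharp_R,
      is_derive_ker_sharp_R. }
  apply is_RInt_unique.
  apply (is_RInt_ext_R (fun t => x * ker_dsharp x t * G x (s + x * t)
           + x * ker_sharp x t * dR G x (s + x * t)
           + ((ker_sharp x t + t * ker_sharp_t x t) * G x (s + x * t)
              + t * ker_sharp x t * (x * du G x (s + x * t))))).
  { intro t. rewrite Rmult_plus_distr_l, ker_sharp_R_eq. ring. }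
  replace (dsharp_int s x (G x) + sharp_int s x (dR G x))
    with (cone_int ker_dsharp s x (G x) + cone_int ker_sharp s x (dR G x)
          + amp x * (G x (s + x) + G x (s - x))) by (unfold dsharp_int, sharp_int; ring).
  apply is_RInt_plus_R; [apply is_RInt_plus_R |].
  - apply is_RInt_cone_int; [exact continuity_2d_pt_ker_dsharp | exact C0].
  - apply (is_RInt_cone_int ker_sharp s continuity_2d_pt_ker_sharp (dR G)), CR.
  - apply is_RInt_sharp_boundary, HG.
Qed.

Lemma is_RInt_dsharp_boundary (G : R -> R -> R) (s x : R) : C1_2d G -> C1_2d (du G) ->
  is_RInt (fun t => / 2 * (ker_sharp x t + t * ker_sharp_t x t) * G x (s + x * t)
                    + / 2 * (t * ker_sharp x t) * (x * du G x (s + x * t))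
                    - (ker_sharp_t x t * du G x (s + x * t)
                       + ker_sharp x t * (x * du (du G) x (s + x * t)))) (-1) 1
    (/ 2 * amp x * (G x (s + x) + G x (s - x)) - amp x * (du G x (s + x) - du G x (s - x))).
Proof.
  intros HG HG'.
  pose proof (continuity_2d_pt_C1_2d G HG) as C0.
  pose proof (continuity_2d_pt_C1_2d _ HG') as Cu.
  pose proof (continuity_2d_pt_du_C1_2d _ HG') as Cuu.
  set (F := fun t => / 2 * (t * ker_sharp x t) * G x (s + x * t) - ker_sharp x t * du G x (s + x * t)).
  replace (/ 2 * amp x * (G x (s + x) + G x (s - x)) - amp x * (du G x (s + x) - du G x (s - x)))
    with (F 1 - F (-1)).
  2: { unfold F. destruct (ker_sharp_pm1 x) as [-> ->].
       replace (s + x * 1) with (s + x) by ring. replace (s + x * -1) with (s - x) by ring. ring. }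
  apply is_RInt_derive_R.
  - intro t. unfold F.
    replace (/ 2 * (ker_sharp x t + t * ker_sharp_t x t) * G x (s + x * t)
             + / 2 * (t * ker_sharp x t) * (x * du G x (s + x * t))
             - (ker_sharp_t x t * du G x (s + x * t)
                + ker_sharp x t * (x * du (du G) x (s + x * t))))
      with ((/ 2 * (1 * ker_sharp x t + t * ker_sharp_t x t) * G x (s + x * t)
             + / 2 * (t * ker_sharp x t) * (x * du G x (s + x * t)))
            - (ker_sharp_t x t * du G x (s + x * t)
               + ker_sharp x t * (x * du (du G) x (s + x * t)))) by ring.
    apply (is_derive_minus (fun t => / 2 * (t * ker_sharp x t) * G x (s + x * t))
                           (fun t => ker_sharp x t * du G x (s + x * t))).
    + apply (is_derive_Rmult (fun t => / 2 * (t * ker_sharp x t)) (fun t => G x (s + x * t))).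
      * apply (is_derive_scal (fun t => t * ker_sharp x t)).
        apply (is_derive_Rmult (fun t => t) (ker_sharp x));
          [apply (is_derive_id (K := R_AbsRing)) | apply is_derive_ker_sharp_t].
      * apply is_derive_line_t, HG.
    + apply (is_derive_Rmult (ker_sharp x) (fun t => du G x (s + x * t))).
      * apply is_derive_ker_sharp_t.
      * apply is_derive_line_t, HG'.
  - intro t. apply (continuity_2d_pt_continuous_r (fun x t =>
      / 2 * (ker_sharp x t + t * ker_sharp_t x t) * G x (s + x * t)
      + / 2 * (t * ker_sharp x t) * (x * du G x (s + x * t))
      - (ker_sharp_t x t * du G x (s + x * t) + ker_sharp x t * (x * du (du G) x (s + x * t))))).
    cont2d.
Qed.

Lemma is_derive_amp_boundary (G : R -> R -> R) (s x : R) : C1_2d G ->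
  is_derive (fun r => amp r * (G r (s + r) + G r (s - r))) x
    (amp x / 2 * (G x (s + x) + G x (s - x))
     + amp x * ((dR G x (s + x) + du G x (s + x)) + (dR G x (s - x) - du G x (s - x)))).
Proof.
  intros HG. apply (is_derive_Rmult amp (fun r => G r (s + r) + G r (s - r)));
    [apply is_derive_amp |].
  apply (is_derive_plus (fun r => G r (s + r)) (fun r => G r (s - r))).
  - replace (dR G x (s + x) + du G x (s + x)) with (dR G x (s + x) * 1 + du G x (s + x) * 1) by ring.
    apply (is_derive_C1_2d_comp G (fun r => r) (fun r => s + r)); [exact HG | |].
    + apply (is_derive_id (K := R_AbsRing)).
    + auto_derive; [exact I | ring].
  - replace (dR G x (s - x) - du G x (s - x)) with (dR G x (s - x) * 1 + du G x (s - x) * -1) by ring.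
    apply (is_derive_C1_2d_comp G (fun r => r) (fun r => s - r)); [exact HG | |].
    + apply (is_derive_id (K := R_AbsRing)).
    + auto_derive; [exact I | ring].
Qed.

Lemma is_derive_dsharp_int (G : R -> R -> R) (s x : R) : C1_2d G -> C1_2d (du G) ->
  is_derive (fun r => dsharp_int s r (G r)) x
    (dsharp_int s x (G x) + sharp_int s x (du (du G) x) + dsharp_int s x (dR G x)).
Proof.
  intros HG HG'.
  pose proof (continuity_2d_pt_C1_2d G HG) as C0.
  pose proof (continuity_2d_pt_dR_C1_2d G HG) as CR.
  pose proof (continuity_2d_pt_du_C1_2d _ HG') as Cuu.
  set (I := RInt (fun t => (ker_dsharp x t + x * ker_dsharp_R x t) * G x (s + x * t)
              + x * ker_dsharp x t * (dR G x (s + x * t) + t * du G x (s + x * t))) (-1) 1).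
  assert (EI : I = / 2 * amp x * (G x (s + x) + G x (s - x))
                   - amp x * (du G x (s + x) - du G x (s - x))
                   + cone_int ker_dsharp s x (G x) + cone_int ker_sharp s x (du (du G) x)
                   + cone_int ker_dsharp s x (dR G x)).
  { apply is_RInt_unique.
    apply (is_RInt_ext_R (fun t =>
             / 2 * (ker_sharp x t + t * ker_sharp_t x t) * G x (s + x * t)
             + / 2 * (t * ker_sharp x t) * (x * du G x (s + x * t))
             - (ker_sharp_t x t * du G x (s + x * t) + ker_sharp x t * (x * du (du G) x (s + x * t)))
             + x * ker_dsharp x t * G x (s + x * t)
             + x * ker_sharp x t * du (du G) x (s + x * t)
             + x * ker_dsharp x t * dR G x (s + x * t))).
    { intro t. rewrite ker_dsharp_R_eq, (ker_sharp_t_eq x t). ring. }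
    apply is_RInt_plus_R; [apply is_RInt_plus_R; [apply is_RInt_plus_R |] |].
    - apply is_RInt_dsharp_boundary; assumption.
    - apply is_RInt_cone_int; [exact continuity_2d_pt_ker_dsharp | exact C0].
    - apply (is_RInt_cone_int ker_sharp s continuity_2d_pt_ker_sharp (du (du G))), Cuu.
    - apply (is_RInt_cone_int ker_dsharp s continuity_2d_pt_ker_dsharp (dR G)), CR. }
  replace (dsharp_int s x (G x) + sharp_int s x (du (du G) x) + dsharp_int s x (dR G x))
    with (amp x / 2 * (G x (s + x) + G x (s - x))
          + amp x * ((dR G x (s + x) + du G x (s + x)) + (dR G x (s - x) - du G x (s - x))) + I)
    by (rewrite EI; unfold dsharp_int, sharp_int; field).
  apply (is_derive_plus (fun r => amp r * (G r (s + r) + G r (s - r)))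
                        (fun r => cone_int ker_dsharp s r (G r))).
  - apply is_derive_amp_boundary, HG.
  - apply is_derive_cone_int; auto using continuity_2d_pt_ker_dsharp, continuity_2d_pt_ker_dsharp_R,
      is_derive_ker_dsharp_R.
Qed.

Lemma continuous_comp_cone (h : R -> R) (s x u : R) : (forall y, continuous h y) ->
  continuous (fun u => h ((u - s) ^ 2 - x ^ 2)) u.
Proof.
  intros Hh. apply (continuous_comp (fun u => (u - s) ^ 2 - x ^ 2) h); [| apply Hh].
  apply (ex_derive_continuous (V := R_NormedModule)). auto_derive. exact I.
Qed.

Lemma pair_sharp_eq (s x : R) (psi : R -> R) : (forall u, continuous psi u) ->
  pair_sharp s x psi = sharp_int s x psi.
Proof.
  intros Hpsi. unfold pair_sharp, sharp_int.
  rewrite (int_R_ext _ (fun u => sgn x * (amp x * f ((u - s) ^ 2 - x ^ 2) * psi u)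
                                   * ind_cone x (u - s)))
    by (intro; unfold chi_sharp, amp; ring).
  assert (Hc : forall u, continuous (fun u => amp x * f ((u - s) ^ 2 - x ^ 2) * psi u) u).
  { intro u. apply continuous_Rmult; [apply continuous_Rmult |].
    - apply continuous_const.
    - apply continuous_comp_cone, continuous_f.
    - apply Hpsi. }
  rewrite int_R_cone, <- RInt_comp_line by exact Hc.
  unfold cone_int. f_equal. apply RInt_ext_R. intro t.
  unfold ker_sharp, cone_arg. do 3 f_equal. ring.
Qed.

Lemma pair_flat_eq (s x : R) (psi : R -> R) : (forall u, continuous psi u) ->
  pair_flat s x psi = dsharp_int s x psi - sharp_int s x psi.
Proof.
  intros Hpsi. unfold pair_flat, dsharp_int, sharp_int.
  rewrite (int_R_ext _ (fun u => sgn x * (- (amp x * (/ 2 * f ((u - s) ^ 2 - x ^ 2)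
                                     + 2 * x * f' ((u - s) ^ 2 - x ^ 2))) * psi u) * ind_cone x (u - s)))
    by (intro; unfold chi_flat_ac, amp; ring).
  assert (Hc : forall u, continuous (fun u => - (amp x * (/ 2 * f ((u - s) ^ 2 - x ^ 2)
                                       + 2 * x * f' ((u - s) ^ 2 - x ^ 2))) * psi u) u).
  { intro u. apply continuous_Rmult; [| apply Hpsi].
    apply (continuous_opp (V := R_NormedModule)), continuous_Rmult; [apply continuous_const |].
    apply (continuous_plus (V := R_NormedModule)); apply continuous_Rmult;
      try apply continuous_const; apply continuous_comp_cone; auto using continuous_f, continuous_f'. }
  rewrite int_R_cone, <- RInt_comp_line by exact Hc.
  assert (HG : forall u v, continuity_2d_pt (fun _ : R => psi) u v)
    by (intros; apply continuity_2d_pt_r, Hpsi).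
  unfold cone_int.
  set (kd := fun t => ker_dsharp x t * psi (s + x * t)).
  set (ks := fun t => ker_sharp x t * psi (s + x * t)).
  rewrite <- Rplus_minus_assoc, <- Rmult_minus_distr_l, <- RInt_minus_R.
  - unfold amp. do 2 f_equal. apply RInt_ext_R. intro t. unfold kd, ks.
    replace ((s + x * t - s) ^ 2 - x ^ 2) with (cone_arg x t) by (unfold cone_arg; ring).
    unfold ker_dsharp, ker_sharp, amp. lra.
  - apply (ex_RInt_cone _ s continuity_2d_pt_ker_dsharp (fun _ => psi)), HG.
  - apply (ex_RInt_cone _ s continuity_2d_pt_ker_sharp (fun _ => psi)), HG.
Qed.

(** * Decay of [e^(R/2) f] as [R -> -oo] *)

Lemma is_lim_seq_sum_f_R0_PSeries (a : nat -> R) (y : R) : ex_pseries a y ->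
  is_lim_seq (fun N => sum_f_R0 (fun k => a k * y ^ k) N) (PSeries a y).
Proof.
  intros H. apply PSeries_correct in H.
  apply is_lim_seq_ext with (sum_n (fun k => scal (pow_n y k) (a k))); [| exact H].
  intro N. rewrite sum_n_Reals. apply sum_eq. intros. rewrite pow_n_pow.
  unfold scal; simpl; unfold mult; simpl. ring.
Qed.

Lemma Rabs_lim_seq_le (u : nat -> R) (l B : R) :
  is_lim_seq u l -> (forall N, Rabs (u N) <= B) -> Rabs l <= B.
Proof.
  intros Hu HB.
  exact (is_lim_seq_le (fun N => Rabs (u N)) (fun _ => B) (Rabs l) B HB
           (is_lim_seq_abs u l Hu) (is_lim_seq_const B)).
Qed.

Lemma exp_term_nonneg (X : R) (n : nat) : 0 <= X -> 0 <= X ^ n / INR (fact n).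
Proof. intros HX. apply Rmult_le_pos; [apply pow_le, HX | apply Rlt_le, Rinv_0_lt_compat, INR_fact_lt_0]. Qed.

Lemma exp_partial_sum_le (X : R) (N : nat) : 0 <= X ->
  sum_f_R0 (fun k => X ^ k / INR (fact k)) N <= exp X.
Proof.
  intros HX.
  assert (L : is_lim_seq (fun N => sum_f_R0 (fun k => X ^ k / INR (fact k)) N) (exp X)).
  { apply is_lim_seq_ext with (fun N => sum_f_R0 (fun k => / INR (fact k) * X ^ k) N).
    { intro. apply sum_eq. intros. unfold Rdiv. ring. }
    pose proof (is_exp_Reals X) as E. rewrite <- (is_pseries_unique _ _ _ E).
    apply is_lim_seq_sum_f_R0_PSeries. exists (exp X). exact E. }
  apply (is_lim_seq_incr_compare _ _ L). intro n. rewrite tech5.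
  pose proof (exp_term_nonneg X (S n) HX). lra.
Qed.

Lemma exp_term_le (X : R) (n : nat) : 0 < X -> X ^ n / INR (fact n) <= (INR n + 1) / X * exp X.
Proof.
  intros HX.
  assert (H : X ^ S n / INR (fact (S n)) <= exp X).
  { eapply Rle_trans; [| apply (exp_partial_sum_le X (S n)); lra].
    rewrite tech5. assert (0 <= sum_f_R0 (fun k => X ^ k / INR (fact k)) n).
    { apply cond_pos_sum. intro k. apply exp_term_nonneg. lra. }
    lra. }
  replace (X ^ n / INR (fact n)) with ((INR n + 1) / X * (X ^ S n / INR (fact (S n)))).
  - apply Rmult_le_compat_l; [| exact H].
    apply Rmult_le_pos; [pose proof (pos_INR n); lra | apply Rlt_le, Rinv_0_lt_compat, HX].
  - rewrite fact_simpl, mult_INR, S_INR. simpl.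
    pose proof (INR_fact_neq_0 n). pose proof (pos_INR n). field. repeat split; lra.
Qed.

Lemma exp_partial_sum_parity_le (X : R) (e N : nat) : 0 <= X ->
  sum_f_R0 (fun k => X ^ (2 * k + e) / INR (fact (2 * k + e))) N <= exp X.
Proof.
  intros HX. eapply Rle_trans; [| apply (exp_partial_sum_le X (2 * N + e) HX)].
  set (g := fun n => X ^ n / INR (fact n)).
  assert (Hg : forall k, 0 <= g k) by (intro; apply exp_term_nonneg, HX).
  change (sum_f_R0 (fun k => g (2 * k + e)%nat) N <= sum_f_R0 g (2 * N + e)).
  induction N as [| N IH].
  - change (g e <= sum_f_R0 g e).
    destruct e as [| e]; [simpl; lra |]. rewrite (tech5 g e).
    pose proof (cond_pos_sum g e Hg). lra.
  - rewrite (tech5 (fun k => g (2 * k + e)%nat) N).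
    replace (2 * S N + e)%nat with (S (S (2 * N + e))) by lia.
    rewrite (tech5 g (S (2 * N + e))), (tech5 g (2 * N + e)).
    specialize (Hg (S (2 * N + e))). lra.
Qed.

(* [C(2k, k) / 4 ^ k]: the ratio between the coefficients of [I0] and of [cosh]. *)
Definition binom_ratio (k : nat) : R := INR (fact (2 * k)) / (4 ^ k * INR (fact k) ^ 2).

Lemma binom_ratio_0 : binom_ratio 0 = 1.
Proof. unfold binom_ratio. simpl. field. Qed.

Lemma binom_ratio_S (k : nat) :
  binom_ratio (S k) = binom_ratio k * (2 * INR k + 1) / (2 * INR k + 2).
Proof.
  unfold binom_ratio. replace (2 * S k)%nat with (S (S (2 * k))) by lia.
  rewrite !fact_simpl, !mult_INR, !S_INR, mult_INR.
  pose proof (INR_fact_neq_0 k). pose proof (INR_fact_neq_0 (2 * k)). pose proof (pos_INR k).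
  simpl pow. replace (INR 2) with 2 by (simpl; ring).
  field. repeat split; try lra. apply pow_nonzero. lra.
Qed.

Lemma binom_ratio_pos (k : nat) : 0 < binom_ratio k.
Proof.
  unfold binom_ratio. apply Rdiv_lt_0_compat; [apply INR_fact_lt_0 |].
  apply Rmult_lt_0_compat; [apply pow_lt; lra | apply pow_lt, INR_fact_lt_0].
Qed.

Lemma binom_ratio_antimono (k m : nat) : (k <= m)%nat -> binom_ratio m <= binom_ratio k.
Proof.
  induction 1 as [| m _ IH]; [lra |]. eapply Rle_trans; [| exact IH].
  rewrite binom_ratio_S. pose proof (binom_ratio_pos m). pose proof (pos_INR m).
  apply Rmult_le_reg_r with (2 * INR m + 2); [lra |].
  unfold Rdiv. rewrite Rmult_assoc, Rinv_l by lra. nra.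
Qed.

Lemma binom_ratio_le1 (k : nat) : binom_ratio k <= 1.
Proof. rewrite <- binom_ratio_0. apply binom_ratio_antimono. lia. Qed.

Lemma binom_ratio_sqr_le (k : nat) : binom_ratio k ^ 2 <= / (2 * INR k + 1).
Proof.
  induction k as [| k IH].
  - rewrite binom_ratio_0. simpl. lra.
  - rewrite binom_ratio_S, S_INR. pose proof (pos_INR k). pose proof (binom_ratio_pos k).
    set (n := INR k) in *. set (b := binom_ratio k) in *.
    replace ((b * (2 * n + 1) / (2 * n + 2)) ^ 2)
      with (b ^ 2 * ((2 * n + 1) ^ 2 / (2 * n + 2) ^ 2)) by (field; lra).
    apply Rle_trans with (/ (2 * n + 1) * ((2 * n + 1) ^ 2 / (2 * n + 2) ^ 2)).
    + apply Rmult_le_compat_r; [| exact IH].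
      apply Rmult_le_pos; [nra | apply Rlt_le, Rinv_0_lt_compat; nra].
    + replace (/ (2 * n + 1) * ((2 * n + 1) ^ 2 / (2 * n + 2) ^ 2))
        with ((2 * n + 1) / (2 * n + 2) ^ 2) by (field; lra).
      apply Rmult_le_reg_r with ((2 * n + 2) ^ 2 * (2 * (n + 1) + 1)); [nra |].
      unfold Rdiv. field_simplify; lra.
Qed.

Lemma binom_ratio_small (eps : R) : 0 < eps -> exists K, binom_ratio K <= eps.
Proof.
  intros He. destruct (INR_archimed (eps ^ 2) 1) as [K HK]; [nra |].
  exists K. pose proof (binom_ratio_sqr_le K). pose proof (binom_ratio_pos K). pose proof (pos_INR K).
  assert (binom_ratio K ^ 2 <= eps ^ 2).
  { eapply Rle_trans; [eassumption |].
    apply Rmult_le_reg_r with (2 * INR K + 1); [lra |]. rewrite Rinv_l by lra. nra. }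
  nra.
Qed.

Lemma sum_weighted_split_le (c T : nat -> R) (K N : nat) (A beta : R) :
  (forall k, 0 <= c k <= 1) -> (forall k, (K <= k)%nat -> c k <= beta) ->
  (forall k, 0 <= T k) -> (forall k, (k < K)%nat -> T k <= A) -> 0 <= A ->
  sum_f_R0 (fun k => c k * T k) N <= INR K * A + beta * sum_f_R0 T N.
Proof.
  intros Hc Hbeta HT HA HA0.
  assert (0 <= beta) by (specialize (Hc K); specialize (Hbeta K (Nat.le_refl K)); lra).
  enough (Hmin : sum_f_R0 (fun k => c k * T k) N <= INR (Nat.min (S N) K) * A + beta * sum_f_R0 T N).
  { assert (INR (Nat.min (S N) K) <= INR K) by (apply le_INR; lia). nra. }
  induction N as [| N IH]; simpl sum_f_R0.
  - specialize (Hc 0%nat). specialize (HT 0%nat). destruct K as [| K].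
    + specialize (Hbeta 0%nat (Nat.le_refl 0)). simpl. nra.
    + replace (Nat.min 1 (S K)) with 1%nat by lia. specialize (HA 0%nat ltac:(lia)). simpl. nra.
  - specialize (Hc (S N)). specialize (HT (S N)).
    destruct (Nat.lt_ge_cases (S N) K) as [Hl | Hg].
    + replace (Nat.min (S (S N)) K) with (S (Nat.min (S N) K)) by lia.
      rewrite S_INR. specialize (HA (S N) Hl). nra.
    + replace (Nat.min (S (S N)) K) with (Nat.min (S N) K) by lia.
      specialize (Hbeta (S N) Hg). nra.
Qed.

(* Splitting at [K]: the first [K] terms are each at most [(2K + 2) e^X / X],
   the others carry a weight at most [beta]. *)
Lemma exp_weighted_sum_le (c : nat -> R) (X : R) (e K N : nat) (beta : R) :
  0 < X -> (e <= 1)%nat -> (forall k, 0 <= c k <= 1) -> (forall k, (K <= k)%nat -> c k <= beta) ->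
  sum_f_R0 (fun k => c k * (X ^ (2 * k + e) / INR (fact (2 * k + e)))) N
    <= exp X * (INR K * (2 * INR K + 2) / X + beta).
Proof.
  intros HX He Hc Hbeta.
  pose proof (exp_pos X). pose proof (pos_INR K).
  set (A := (2 * INR K + 2) / X * exp X).
  assert (HA : 0 <= A).
  { apply Rmult_le_pos; [apply Rmult_le_pos; [lra | apply Rlt_le, Rinv_0_lt_compat, HX] | lra]. }
  eapply Rle_trans.
  { apply (sum_weighted_split_le c (fun k => X ^ (2 * k + e) / INR (fact (2 * k + e))) K N A beta);
      try assumption.
    - intro k. apply exp_term_nonneg. lra.
    - intros k Hk. eapply Rle_trans; [apply exp_term_le, HX |]. unfold A.
      apply Rmult_le_compat_r; [lra |]. unfold Rdiv. apply Rmult_le_compat_r.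
      + apply Rlt_le, Rinv_0_lt_compat, HX.
      + rewrite plus_INR, mult_INR. apply le_INR in He. apply lt_INR in Hk. simpl in *. lra. }
  assert (0 <= beta) by (specialize (Hc K); specialize (Hbeta K (Nat.le_refl K)); lra).
  pose proof (exp_partial_sum_parity_le X e N ltac:(lra)).
  replace (exp X * (INR K * (2 * INR K + 2) / X + beta)) with (INR K * A + beta * exp X)
    by (unfold A; field; lra).
  apply Rplus_le_compat_l, Rmult_le_compat_l; assumption.
Qed.

Lemma Rabs_f_coef (k : nat) : Rabs (f_coef k) = / 16 ^ k / INR (fact k) ^ 2.
Proof.
  unfold f_coef, Rdiv. rewrite Rabs_mult, <- RPow_abs, Rabs_Ropp.
  rewrite Rabs_right by lra. rewrite Rabs_right, pow_inv; [reflexivity |].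
  apply Rle_ge, Rlt_le, Rinv_0_lt_compat, pow_lt, INR_fact_lt_0.
Qed.

Lemma f_coef_binom_ratio (X : R) (k : nat) :
  Rabs (f_coef k) * (4 * X ^ 2) ^ k = binom_ratio k * (X ^ (2 * k + 0) / INR (fact (2 * k + 0))).
Proof.
  rewrite Rabs_f_coef. unfold binom_ratio. rewrite Nat.add_0_r, pow_mult, Rpow_mult_distr.
  replace (16 ^ k) with (4 ^ k * 4 ^ k) by (rewrite <- Rpow_mult_distr; f_equal; ring).
  pose proof (INR_fact_neq_0 k). pose proof (INR_fact_neq_0 (2 * k)).
  assert (4 ^ k <> 0) by (apply pow_nonzero; lra).
  field. auto.
Qed.

Lemma PS_derive_f_coef_binom_ratio (X : R) (k : nat) :
  2 * X * Rabs (PS_derive f_coef k) * (4 * X ^ 2) ^ k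
  = binom_ratio (S k) / 4 * (X ^ (2 * k + 1) / INR (fact (2 * k + 1))).
Proof.
  unfold PS_derive. rewrite Rabs_mult, Rabs_f_coef, Rabs_right by (apply Rle_ge, pos_INR).
  unfold binom_ratio. replace (2 * S k)%nat with (S (2 * k + 1)) by lia.
  rewrite (fact_simpl (2 * k + 1)), mult_INR.
  replace (X ^ (2 * k + 1)) with (X * (X ^ 2) ^ k) by (rewrite pow_add, pow_mult; simpl; ring).
  rewrite Rpow_mult_distr.
  replace (16 ^ S k) with (4 ^ S k * 4 ^ S k) by (rewrite <- Rpow_mult_distr; f_equal; ring).
  rewrite (fact_simpl k), mult_INR.
  pose proof (INR_fact_neq_0 k). pose proof (INR_fact_neq_0 (2 * k + 1)). pose proof (pos_INR k).
  assert (4 ^ k <> 0) by (apply pow_nonzero; lra).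
  rewrite !S_INR, plus_INR, mult_INR. simpl pow. replace (INR 2) with 2 by (simpl; ring).
  replace (INR 1) with 1 by reflexivity.
  field. repeat split; lra.
Qed.

Lemma Rabs_f_le (x y : R) (K : nat) : x < 0 -> Rabs y <= x ^ 2 ->
  Rabs (f y) <= exp (- x / 2) * (INR K * (2 * INR K + 2) / (- x / 2) + binom_ratio K).
Proof.
  intros Hx Hy. set (X := - x / 2).
  apply (Rabs_lim_seq_le (fun N => sum_f_R0 (fun k => f_coef k * y ^ k) N)).
  { apply is_lim_seq_sum_f_R0_PSeries, ex_pseries_entire, CV_radius_f_coef. }
  intro N. eapply Rle_trans; [apply sum_f_R0_triangle |].
  apply Rle_trans with (sum_f_R0 (fun k => binom_ratio k * (X ^ (2 * k + 0) / INR (fact (2 * k + 0)))) N).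
  - apply sum_Rle. intros k _. rewrite <- f_coef_binom_ratio, Rabs_mult, <- RPow_abs.
    apply Rmult_le_compat_l; [apply Rabs_pos |]. apply pow_incr. split; [apply Rabs_pos |].
    replace (4 * X ^ 2) with (x ^ 2) by (unfold X; field). exact Hy.
  - apply exp_weighted_sum_le; [unfold X; lra | lia | |].
    + intro k. split; [apply Rlt_le, binom_ratio_pos | apply binom_ratio_le1].
    + intros k Hk. apply binom_ratio_antimono, Hk.
Qed.

Lemma Rabs_f'_le (x y : R) (K : nat) : x < 0 -> Rabs y <= x ^ 2 ->
  Rabs x * Rabs (f' y) <= exp (- x / 2) * (INR K * (2 * INR K + 2) / (- x / 2) + binom_ratio K).
Proof.
  intros Hx Hy. set (X := - x / 2).
  rewrite <- Rabs_mult, f'_PSeries.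
  apply (Rabs_lim_seq_le (fun N => x * sum_f_R0 (fun k => PS_derive f_coef k * y ^ k) N)).
  { apply (is_lim_seq_scal_l _ x (PSeries (PS_derive f_coef) y)).
    apply is_lim_seq_sum_f_R0_PSeries, ex_pseries_entire, CV_radius_PS_derive_entire, CV_radius_f_coef. }
  intro N. rewrite scal_sum. eapply Rle_trans; [apply sum_f_R0_triangle |].
  apply Rle_trans
    with (sum_f_R0 (fun k => binom_ratio (S k) / 4 * (X ^ (2 * k + 1) / INR (fact (2 * k + 1)))) N).
  - apply sum_Rle. intros k _. rewrite <- PS_derive_f_coef_binom_ratio, !Rabs_mult, <- RPow_abs.
    replace (Rabs x) with (2 * X) by (unfold X; rewrite Rabs_left by lra; field).
    rewrite (Rmult_comm (Rabs (PS_derive f_coef k) * Rabs y ^ k)), <- !Rmult_assoc.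
    apply Rmult_le_compat_l; [| apply pow_incr; split; [apply Rabs_pos |]].
    + apply Rmult_le_pos; [unfold X; lra | apply Rabs_pos].
    + replace (4 * X ^ 2) with (x ^ 2) by (unfold X; field). exact Hy.
  - apply exp_weighted_sum_le; [unfold X; lra | lia | |].
    + intro k. pose proof (binom_ratio_pos (S k)). pose proof (binom_ratio_le1 (S k)). split; lra.
    + intros k Hk. pose proof (binom_ratio_antimono K (S k) ltac:(lia)).
      pose proof (binom_ratio_pos (S k)). lra.
Qed.

Lemma exp_f_vanish (eps : R) : 0 < eps -> exists A, forall x y, x < A -> Rabs y <= x ^ 2 ->
  exp (x / 2) * Rabs (f y) <= eps /\ exp (x / 2) * (Rabs x * Rabs (f' y)) <= eps.
Proof.
  intros He. destruct (binom_ratio_small (eps / 2)) as [K HK]; [lra |].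
  set (C := INR K * (2 * INR K + 2)).
  assert (HC : 0 <= C) by (unfold C; pose proof (pos_INR K); nra).
  assert (HCe : 0 <= 4 * C / eps) by (apply Rmult_le_pos; [lra | apply Rlt_le, Rinv_0_lt_compat, He]).
  exists (- (4 * C / eps) - 1). intros x y Hx Hy.
  assert (Hb : C / (- x / 2) <= eps / 2).
  { assert (E : 4 * C / eps * eps = 4 * C) by (field; lra).
    apply Rmult_le_reg_r with (- x / 2); [lra |].
    replace (C / (- x / 2) * (- x / 2)) with C by (field; lra). nra. }
  assert (Ee : exp (x / 2) * exp (- x / 2) = 1)
    by (rewrite <- exp_plus; replace (x / 2 + - x / 2) with 0 by field; apply exp_0).
  pose proof (exp_pos (x / 2)).
  pose proof (Rabs_f_le x y K ltac:(lra) Hy) as Hf. pose proof (Rabs_f'_le x y K ltac:(lra) Hy) as Hf'.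
  fold C in Hf, Hf'.
  split; (eapply Rle_trans; [apply Rmult_le_compat_l; [lra | eassumption] |]);
    rewrite <- Rmult_assoc, Ee; lra.
Qed.

Lemma Rabs_cone_arg_le (x t : R) : -1 <= t <= 1 -> Rabs (cone_arg x t) <= x ^ 2.
Proof.
  intros Ht. unfold cone_arg.
  rewrite Rabs_mult, (Rabs_right (x ^ 2)), Rabs_left1 by nra. nra.
Qed.





Lemma ker_sharp_vanish (eps : R) : 0 < eps ->
  exists A, forall x t, x < A -> -1 <= t <= 1 -> Rabs (ker_sharp x t) <= eps.
Proof.
  intros He. destruct (exp_f_vanish eps He) as [A HA]. exists A. intros x t Hx Ht.
  destruct (HA x (cone_arg x t) Hx (Rabs_cone_arg_le x t Ht)) as [Hf _].
  pose proof (exp_pos (x / 2)).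
  unfold ker_sharp, amp. rewrite !Rabs_mult, !Rabs_right by lra. lra.
Qed.

Lemma ker_dsharp_vanish (eps : R) : 0 < eps ->
  exists A, forall x t, x < A -> -1 <= t <= 1 -> Rabs (ker_dsharp x t) <= eps.
Proof.
  intros He. destruct (exp_f_vanish (eps / 2)) as [A HA]; [lra |]. exists A. intros x t Hx Ht.
  destruct (HA x (cone_arg x t) Hx (Rabs_cone_arg_le x t Ht)) as [Hf Hf'].
  pose proof (exp_pos (x / 2)).
  assert (T : Rabs (/ 2 * f (cone_arg x t) - 2 * x * f' (cone_arg x t))
              <= / 2 * Rabs (f (cone_arg x t)) + 2 * (Rabs x * Rabs (f' (cone_arg x t)))).
  { eapply Rle_trans; [apply Rabs_triang |].
    rewrite Rabs_Ropp, !Rabs_mult, (Rabs_right (/ 2)), (Rabs_right 2) by lra. lra. }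
  apply Rmult_le_compat_l with (r := exp (x / 2)) in T; [| lra].
  unfold ker_dsharp, amp. rewrite Rabs_mult, (Rabs_mult (/ 2)), !Rabs_right by lra. lra.
Qed.

(** * Pairings with a test function of [u] *)

Lemma C1_2d_lift (h : R -> R) : (forall u, ex_derive h u) -> (forall u, ex_derive (Derive h) u) ->
  C1_2d (fun _ u => h u).
Proof.
  intros H1 H2 x y. repeat split.
  - apply ex_derive_const.
  - apply H1.
  - apply continuity_2d_pt_r, (ex_derive_continuous (V := R_NormedModule)), H1.
  - apply (continuity_2d_pt_ext (fun _ _ => 0)); [intros; symmetry; unfold dR; apply Derive_const |].
    apply continuity_2d_pt_const.
  - apply (continuity_2d_pt_r (Derive h)), (ex_derive_continuous (V := R_NormedModule)), H2.
Qed.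

Lemma sharp_int_dR_lift (h : R -> R) (s x : R) : sharp_int s x (dR (fun _ u => h u) x) = 0.
Proof. unfold sharp_int. rewrite <- (cone_int_0_r ker_sharp s x). apply cone_int_ext. intro. unfold dR. apply Derive_const. Qed.

Lemma dsharp_int_dR_lift (h : R -> R) (s x : R) : dsharp_int s x (dR (fun _ u => h u) x) = 0.
Proof.
  unfold dsharp_int, dR. rewrite !Derive_const.
  rewrite (cone_int_ext _ _ _ _ (fun _ => 0)), cone_int_0_r by (intro; apply Derive_const). ring.
Qed.

Section TestFunction.
Variables (s : R) (psi : R -> R).
Hypothesis psi_test : test1 psi.

Let psi_derive (n : nat) (u : R) : ex_derive (Derive_n psi n) u := proj1 psi_test n u.

Lemma test1_continuous (u : R) : continuous psi u.
Proof. apply (ex_derive_continuous (V := R_NormedModule)), (psi_derive 0). Qed.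

Lemma is_derive_sharp_int_test1 (x : R) :
  is_derive (fun r => sharp_int s r psi) x (dsharp_int s x psi).
Proof.
  pose proof (is_derive_sharp_int (fun _ => psi) s x
                (C1_2d_lift psi (psi_derive 0) (psi_derive 1))) as H.
  rewrite sharp_int_dR_lift, Rplus_0_r in H. exact H.
Qed.

Lemma is_derive_dsharp_int_test1 (x : R) :
  is_derive (fun r => dsharp_int s r psi) x (dsharp_int s x psi + sharp_int s x (Derive (Derive psi))).
Proof.
  pose proof (is_derive_dsharp_int (fun _ => psi) s x
                (C1_2d_lift psi (psi_derive 0) (psi_derive 1))
                (C1_2d_lift (Derive psi) (psi_derive 1) (psi_derive 2))) as H.
  rewrite dsharp_int_dR_lift, Rplus_0_r in H. exact H.
Qed.

Lemma is_derive_sharp_int_test1'' (x : R) :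
  is_derive (fun r => sharp_int s r (Derive (Derive psi))) x (dsharp_int s x (Derive (Derive psi))).
Proof.
  pose proof (is_derive_sharp_int (fun _ => Derive (Derive psi)) s x
                (C1_2d_lift _ (psi_derive 2) (psi_derive 3))) as H.
  rewrite sharp_int_dR_lift, Rplus_0_r in H. exact H.
Qed.

Lemma is_derive_pair_sharp (x : R) : is_derive (fun r => pair_sharp s r psi) x (dsharp_int s x psi).
Proof.
  apply (is_derive_ext (fun r => sharp_int s r psi)); [| apply is_derive_sharp_int_test1].
  intro r. symmetry. apply pair_sharp_eq, test1_continuous.
Qed.

Lemma is_derive_pair_flat (x : R) :
  is_derive (fun r => pair_flat s r psi) x (sharp_int s x (Derive (Derive psi))).
Proof.
  apply (is_derive_ext (fun r => dsharp_int s r psi - sharp_int s r psi)).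
  { intro r. symmetry. apply pair_flat_eq, test1_continuous. }
  replace (sharp_int s x (Derive (Derive psi)))
    with (dsharp_int s x psi + sharp_int s x (Derive (Derive psi)) - dsharp_int s x psi) by ring.
  apply (is_derive_minus (fun r => dsharp_int s r psi) (fun r => sharp_int s r psi)).
  - apply is_derive_dsharp_int_test1.
  - apply is_derive_sharp_int_test1.
Qed.

Lemma pair_flat_Derive_pair_sharp (x : R) :
  pair_flat s x psi = Derive (fun r => pair_sharp s r psi) x - pair_sharp s x psi.
Proof.
  replace (Derive (fun r => pair_sharp s r psi) x) with (dsharp_int s x psi)
    by (symmetry; apply is_derive_unique, is_derive_pair_sharp).
  rewrite pair_flat_eq, pair_sharp_eq by apply test1_continuous. reflexivity.
Qed.

Lemma is_lim_pair_sharp_0 : is_lim (fun x => pair_sharp s x psi) 0 0.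
Proof.
  apply is_lim_derivable.
  - intro y. eexists. apply is_derive_pair_sharp.
  - rewrite pair_sharp_eq by apply test1_continuous. apply sharp_int_0.
Qed.

Lemma is_lim_Derive_pair_sharp_0 : is_lim (fun x => Derive (fun r => pair_sharp s r psi) x) 0 (psi s).
Proof.
  apply (is_lim_ext (fun x => dsharp_int s x psi)).
  { intro x. symmetry. apply is_derive_unique, is_derive_pair_sharp. }
  apply is_lim_derivable; [| apply dsharp_int_0].
  intro y. eexists. apply is_derive_dsharp_int_test1.
Qed.

Lemma is_lim_pair_flat_0 : is_lim (fun x => pair_flat s x psi) 0 (psi s).
Proof.
  apply is_lim_derivable.
  - intro y. eexists. apply is_derive_pair_flat.
  - rewrite pair_flat_eq, dsharp_int_0, sharp_int_0 by apply test1_continuous. ring.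
Qed.

Lemma is_lim_Derive_pair_flat_0 : is_lim (fun x => Derive (fun r => pair_flat s r psi) x) 0 0.
Proof.
  apply (is_lim_ext (fun x => sharp_int s x (Derive (Derive psi)))).
  { intro x. symmetry. apply is_derive_unique, is_derive_pair_flat. }
  apply is_lim_derivable; [| apply sharp_int_0].
  intro y. eexists. apply is_derive_sharp_int_test1''.
Qed.

Lemma is_lim_sharp_int_m_infty : is_lim (fun x => sharp_int s x psi) m_infty 0.
Proof.
  exact (is_lim_cone_int_m_infty ker_sharp s continuity_2d_pt_ker_sharp psi test1_continuous
           (proj2 psi_test) ker_sharp_vanish).
Qed.

Lemma is_lim_pair_sharp_m_infty : is_lim (fun x => pair_sharp s x psi) m_infty 0.
Proof.
  apply (is_lim_ext (fun x => sharp_int s x psi)); [| exact is_lim_sharp_int_m_infty].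
  intro x. symmetry. apply pair_sharp_eq, test1_continuous.
Qed.

Lemma is_lim_pair_flat_m_infty : is_lim (fun x => pair_flat s x psi) m_infty 0.
Proof.
  destruct (proj2 psi_test) as [M HM].
  apply (is_lim_ext_loc (fun x => cone_int ker_dsharp s x psi - sharp_int s x psi)).
  { exists (- (Rabs M + Rabs s)). intros x Hx.
    pose proof (Rle_abs M). pose proof (Rabs_triang_inv x s). pose proof (Rabs_triang_inv x (- s)).
    rewrite Rabs_Ropp in *. pose proof (Rabs_pos s). pose proof (Rabs_pos M).
    assert (Rabs x = - x) by (apply Rabs_left; lra).
    rewrite pair_flat_eq by apply test1_continuous. unfold dsharp_int.
    rewrite (HM (s + x)), (HM (s - x)).
    - ring.
    - rewrite Rabs_minus_sym. lra.
    - replace (s + x) with (x - - s) by ring. lra. }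
  apply (is_lim_minus _ _ _ 0 0); [| exact is_lim_sharp_int_m_infty |].
  - exact (is_lim_cone_int_m_infty ker_dsharp s continuity_2d_pt_ker_dsharp psi test1_continuous
             (proj2 psi_test) ker_dsharp_vanish).
  - unfold is_Rbar_minus, is_Rbar_plus. simpl. do 2 f_equal. ring.
Qed.

End TestFunction.

(** * The equation in the sense of distributions *)

Definition sharp_potential (s : R) (phi : R -> R -> R) (x : R) : R :=
  sharp_int s x (dR phi x) - dsharp_int s x (phi x) + sharp_int s x (phi x).

Lemma is_derive_sharp_potential (s : R) (phi : R -> R -> R) (x : R) :
  C1_2d phi -> C1_2d (dR phi) -> C1_2d (du phi) ->
  is_derive (sharp_potential s phi) x (sharp_int s x (Ladj phi x)).
Proof.
  intros H0 HR Hu.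
  replace (sharp_int s x (Ladj phi x))
    with ((dsharp_int s x (dR phi x) + sharp_int s x (dR (dR phi) x))
          - (dsharp_int s x (phi x) + sharp_int s x (du (du phi) x) + dsharp_int s x (dR phi x))
          + (dsharp_int s x (phi x) + sharp_int s x (dR phi x))).
  2: { unfold Ladj, sharp_int. rewrite cone_int_lin; [ring | exact continuity_2d_pt_ker_sharp | ..].
       - apply continuity_2d_pt_dR_C1_2d, HR.
       - apply continuity_2d_pt_du_C1_2d, Hu.
       - apply continuity_2d_pt_C1_2d, HR. }
  apply (is_derive_plus (fun r => sharp_int s r (dR phi r) - dsharp_int s r (phi r))
                        (fun r => sharp_int s r (phi r)));
    [apply (is_derive_minus (fun r => sharp_int s r (dR phi r)) (fun r => dsharp_int s r (phi r))) |].
  - apply is_derive_sharp_int, HR.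
  - apply is_derive_dsharp_int; assumption.
  - apply is_derive_sharp_int, H0.
Qed.

Lemma sharp_potential_vanish (s : R) (phi : R -> R -> R) (x : R) :
  (forall y, phi x y = 0 /\ dR phi x y = 0) -> sharp_potential s phi x = 0.
Proof.
  intros H. unfold sharp_potential, sharp_int, dsharp_int.
  rewrite !(proj1 (H _)), !(cone_int_ext _ _ _ (phi x) (fun _ => 0)),
    (cone_int_ext _ _ _ (dR phi x) (fun _ => 0)), !cone_int_0_r by (intro; apply H).
  ring.
Qed.

Lemma Dw_vanish (phi : R -> R -> R) (M : R) : (forall x y, M < Rabs x -> phi x y = 0) ->
  forall w x y, M < Rabs x -> Dw w phi x y = 0.
Proof.
  intros HM w. induction w as [| [|] w IH]; intros x y Hx; simpl.
  - apply HM, Hx.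
  - unfold dR. rewrite (Derive_ext_loc _ (fun _ => 0)); [apply Derive_const |].
    assert (Hd : 0 < Rabs x - M) by lra.
    exists (mkposreal _ Hd). intros t Ht. change R in t. apply IH.
    change (Rabs (t - x) < Rabs x - M) in Ht.
    pose proof (Rabs_triang_inv x (x - t)). replace (x - (x - t)) with t in H by ring.
    rewrite Rabs_minus_sym in Ht. lra.
  - unfold du. rewrite (Derive_ext _ (fun _ => 0)); [apply Derive_const |].
    intro t. apply IH, Hx.
Qed.

Lemma continuity_2d_pt_Ladj (g : R -> R -> R) (x y : R) :
  continuity_2d_pt (dR (dR g)) x y -> continuity_2d_pt (du (du g)) x y ->
  continuity_2d_pt (dR g) x y -> continuity_2d_pt (Ladj g) x y.
Proof. intros. unfold Ladj. apply continuity_2d_pt_plus; [apply continuity_2d_pt_minus |]; assumption. Qed.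

Section TestFunction2d.
Variable phi : R -> R -> R.
Hypothesis phi_test : test2 phi.

Lemma test2_ex_derive_R (w : list bool) (x y : R) : ex_derive (fun t => Dw w phi t y) x.
Proof. exact (proj1 (proj1 phi_test w x y)). Qed.

Lemma test2_ex_derive_u (w : list bool) (x y : R) : ex_derive (fun t => Dw w phi x t) y.
Proof. exact (proj1 (proj2 (proj1 phi_test w x y))). Qed.

Lemma test2_continuity (w : list bool) (x y : R) : continuity_2d_pt (Dw w phi) x y.
Proof. exact (proj2 (proj2 (proj1 phi_test w x y))). Qed.

Lemma test2_C1_2d (w : list bool) : C1_2d (Dw w phi).
Proof.
  intros x y. repeat split.
  - apply test2_ex_derive_R.
  - apply test2_ex_derive_u.
  - apply test2_continuity.
  - exact (test2_continuity (true :: w) x y).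
  - exact (test2_continuity (false :: w) x y).
Qed.

Lemma test2_dR_du (w : list bool) (x y : R) : dR (du (Dw w phi)) x y = du (dR (Dw w phi)) x y.
Proof.
  unfold dR, du. apply Schwarz.
  - exists (mkposreal 1 Rlt_0_1). intros u v _ _. repeat split.
    + apply (test2_ex_derive_R w).
    + apply (test2_ex_derive_u w).
    + apply (test2_ex_derive_R (false :: w)).
    + apply (test2_ex_derive_u (true :: w)).
  - apply (test2_continuity (true :: false :: w)).
  - apply (test2_continuity (false :: true :: w)).
Qed.

Lemma dR_Ladj (x y : R) : dR (Ladj phi) x y = Ladj (dR phi) x y.
Proof.
  assert (E : dR (du (du phi)) x y = du (du (dR phi)) x y).
  { rewrite (test2_dR_du (false :: nil)). unfold du at 1 3. apply Derive_ext. intro t.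
    apply (test2_dR_du nil). }
  pose proof (test2_ex_derive_R (true :: true :: nil) x y) as HRR.
  pose proof (test2_ex_derive_R (false :: false :: nil) x y) as Huu.
  pose proof (test2_ex_derive_R (true :: nil) x y) as HR.
  unfold Ladj, dR at 1.
  rewrite (Derive_plus (fun t => dR (dR phi) t y - du (du phi) t y) (fun t => dR phi t y)),
    (Derive_minus (fun t => dR (dR phi) t y) (fun t => du (du phi) t y)) by
    (try apply (ex_derive_minus (fun t => dR (dR phi) t y) (fun t => du (du phi) t y)); assumption).
  rewrite <- E. reflexivity.
Qed.

Lemma du_Ladj (x y : R) :
  du (Ladj phi) x y = du (dR (dR phi)) x y - du (du (du phi)) x y + du (dR phi) x y.
Proof.
  pose proof (test2_ex_derive_u (true :: true :: nil) x y) as HRR.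
  pose proof (test2_ex_derive_u (false :: false :: nil) x y) as Huu.
  pose proof (test2_ex_derive_u (true :: nil) x y) as HR.
  unfold Ladj, du at 1.
  rewrite (Derive_plus (fun t => dR (dR phi) x t - du (du phi) x t) (fun t => dR phi x t)),
    (Derive_minus (fun t => dR (dR phi) x t) (fun t => du (du phi) x t)) by
    (try apply (ex_derive_minus (fun t => dR (dR phi) x t) (fun t => du (du phi) x t)); assumption).
  reflexivity.
Qed.

Lemma test2_C1_2d_Ladj : C1_2d (Ladj phi).
Proof.
    intros x y. repeat split.
  - apply (ex_derive_plus (fun t => dR (dR phi) t y - du (du phi) t y) (fun t => dR phi t y));
      [apply (ex_derive_minus (fun t => dR (dR phi) t y) (fun t => du (du phi) t y)) |].
    + apply (test2_ex_derive_R (true :: true :: nil)).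
    + apply (test2_ex_derive_R (false :: false :: nil)).
    + apply (test2_ex_derive_R (true :: nil)).
  - apply (ex_derive_plus (fun t => dR (dR phi) x t - du (du phi) x t) (fun t => dR phi x t));
      [apply (ex_derive_minus (fun t => dR (dR phi) x t) (fun t => du (du phi) x t)) |].
    + apply (test2_ex_derive_u (true :: true :: nil)).
    + apply (test2_ex_derive_u (false :: false :: nil)).
    + apply (test2_ex_derive_u (true :: nil)).
  - apply continuity_2d_pt_Ladj.
    + apply (test2_continuity (true :: true :: nil)).
    + apply (test2_continuity (false :: false :: nil)).
    + apply (test2_continuity (true :: nil)).
  - apply (continuity_2d_pt_ext (Ladj (dR phi))); [intros; symmetry; apply dR_Ladj |].
    apply continuity_2d_pt_Ladj.
    + apply (test2_continuity (true :: true :: true :: nil)).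
    + apply (test2_continuity (false :: false :: true :: nil)).
    + apply (test2_continuity (true :: true :: nil)).
  - apply (continuity_2d_pt_ext (fun x y => du (dR (dR phi)) x y - du (du (du phi)) x y
                                           + du (dR phi) x y)); [intros; symmetry; apply du_Ladj |].
    apply continuity_2d_pt_plus; [apply continuity_2d_pt_minus |].
    + apply (test2_continuity (false :: true :: true :: nil)).
    + apply (test2_continuity (false :: false :: false :: nil)).
    + apply (test2_continuity (false :: true :: nil)).
Qed.

Lemma test2_Dw_vanish : exists M, forall w x y, M < Rabs x -> Dw w phi x y = 0.
Proof.
  destruct (proj2 phi_test) as [M HM]. exists M.
  apply Dw_vanish. intros x y Hx. apply HM. left. exact Hx.
Qed.

Lemma continuous_Ladj_r (x u : R) : continuous (Ladj phi x) u.
Proof. apply continuity_2d_pt_continuous_r, continuity_2d_pt_C1_2d, test2_C1_2d_Ladj. Qed.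

Lemma dist_sharp_Ladj (s : R) : dist_sharp s (Ladj phi) = 0.
Proof.
  destruct test2_Dw_vanish as [M HM].
  unfold dist_sharp.
  rewrite (int_R_ext _ (fun x => sharp_int s x (Ladj phi x)))
    by (intro x; apply pair_sharp_eq, continuous_Ladj_r).
  apply (int_R_derive_compact (sharp_potential s phi) _ M).
  - intro x. apply is_derive_sharp_potential.
    + exact (test2_C1_2d nil).
    + exact (test2_C1_2d (true :: nil)).
    + exact (test2_C1_2d (false :: nil)).
  - intro x. apply continuous_cone_int; [exact continuity_2d_pt_ker_sharp |].
    apply continuity_2d_pt_C1_2d, test2_C1_2d_Ladj.
  - intros x Hx. apply sharp_potential_vanish. intro y.
    split; [apply (HM nil) | apply (HM (cons true nil))]; exact Hx.
Qed.

(* [chi_flat = chi_sharp_R - chi_sharp], and [L*] commutes with [d/dR]. *)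
Definition flat_potential (s x : R) : R :=
  sharp_int s x (Ladj phi x) - sharp_potential s (dR phi) x - sharp_potential s phi x.

Lemma is_derive_flat_potential (s x : R) :
  is_derive (flat_potential s) x (dsharp_int s x (Ladj phi x) - sharp_int s x (Ladj phi x)).
Proof.
  replace (dsharp_int s x (Ladj phi x) - sharp_int s x (Ladj phi x))
    with (dsharp_int s x (Ladj phi x) + sharp_int s x (dR (Ladj phi) x)
          - sharp_int s x (Ladj (dR phi) x) - sharp_int s x (Ladj phi x)).
  2: { unfold sharp_int. rewrite (cone_int_ext _ _ _ (dR (Ladj phi) x) (Ladj (dR phi) x)).
       - ring.
       - intro. apply dR_Ladj. }
  apply (is_derive_minus (fun x => sharp_int s x (Ladj phi x) - sharp_potential s (dR phi) x)
                         (sharp_potential s phi));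
    [apply (is_derive_minus (fun x => sharp_int s x (Ladj phi x)) (sharp_potential s (dR phi))) |].
  - apply is_derive_sharp_int, test2_C1_2d_Ladj.
  - apply is_derive_sharp_potential.
    + exact (test2_C1_2d (true :: nil)).
    + exact (test2_C1_2d (true :: true :: nil)).
    + exact (test2_C1_2d (false :: true :: nil)).
  - apply is_derive_sharp_potential.
    + exact (test2_C1_2d nil).
    + exact (test2_C1_2d (true :: nil)).
    + exact (test2_C1_2d (false :: nil)).
Qed.

Lemma flat_potential_vanish (s : R) :
  exists M, forall x, M < Rabs x -> flat_potential s x = 0.
Proof.
  destruct test2_Dw_vanish as [M HM]. exists M. intros x Hx. unfold flat_potential.
  rewrite !sharp_potential_vanish.
  - unfold sharp_int. rewrite (cone_int_ext _ _ _ _ (fun _ => 0)), cone_int_0_r; [ring |].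
    intro y. unfold Ladj.
    pose proof (HM (cons true (cons true nil)) x y Hx) as HRR.
    pose proof (HM (cons false (cons false nil)) x y Hx) as Huu.
    pose proof (HM (cons true nil) x y Hx) as HR. simpl in HRR, Huu, HR.
    rewrite HRR, Huu, HR. ring.
  - intro y. split; [apply (HM nil) | apply (HM (cons true nil))]; exact Hx.
  - intro y. split; [apply (HM (cons true nil)) | apply (HM (cons true (cons true nil)))]; exact Hx.
Qed.

Lemma dist_flat_Ladj (s : R) : dist_flat s (Ladj phi) = 0.
Proof.
  destruct (flat_potential_vanish s) as [M HM].
  pose proof (continuity_2d_pt_C1_2d _ test2_C1_2d_Ladj) as HL.
  unfold dist_flat.
  rewrite (int_R_ext _ (fun x => dsharp_int s x (Ladj phi x) - sharp_int s x (Ladj phi x)))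
    by (intro x; apply pair_flat_eq, continuous_Ladj_r).
  apply (int_R_derive_compact (flat_potential s) _ M); [apply is_derive_flat_potential | | exact HM].
  intro x. apply (continuous_minus (V := R_NormedModule) (fun x => dsharp_int s x (Ladj phi x))).
  - apply continuous_dsharp_int, HL.
  - apply continuous_cone_int; [exact continuity_2d_pt_ker_sharp | exact HL].
Qed.

End TestFunction2d.


Theorem theorem2p2 (s : R) :
  (* chi^sharp solves chi_RR - chi_uu - chi_R = 0 in D'(R^2) *)
  (forall phi, test2 phi -> dist_sharp s (Ladj phi) = 0) /\
  (* chi^flat solves chi_RR - chi_uu - chi_R = 0 in D'(R^2) *)
  (forall phi, test2 phi -> dist_flat s (Ladj phi) = 0) /\
  (forall psi, test1 psi ->
     (* R-derivatives of the u-pairings exist *)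
     (forall R0, ex_derive (fun r => pair_sharp s r psi) R0) /\
     (forall R0, ex_derive (fun r => pair_flat s r psi) R0) /\
     (* initial data of chi^sharp at R -> 0 *)
     is_lim (fun R0 => pair_sharp s R0 psi) 0 0 /\
     is_lim (fun R0 => Derive (fun r => pair_sharp s r psi) R0) 0 (psi s) /\
     (* initial data of chi^flat at R -> 0 *)
     is_lim (fun R0 => pair_flat s R0 psi) 0 (psi s) /\
     is_lim (fun R0 => Derive (fun r => pair_flat s r psi) R0) 0 0 /\
     (* decay as R -> -oo *)
     is_lim (fun R0 => pair_sharp s R0 psi) m_infty 0 /\
     is_lim (fun R0 => pair_flat s R0 psi) m_infty 0 /\
     (* chi^flat = chi^sharp_R - chi^sharp *)
     (forall R0, pair_flat s R0 psi
                 = Derive (fun r => pair_sharp s r psi) R0 - pair_sharp s R0 psi)).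
Proof.
  split; [intros phi Hphi; apply (dist_sharp_Ladj phi Hphi) |].
  split; [intros phi Hphi; apply (dist_flat_Ladj phi Hphi) |].
  intros psi Hpsi. repeat split.
  - intro x. eexists. apply is_derive_pair_sharp, Hpsi.
  - intro x. eexists. apply is_derive_pair_flat, Hpsi.
  - apply is_lim_pair_sharp_0, Hpsi.
  - apply is_lim_Derive_pair_sharp_0, Hpsi.
  - apply is_lim_pair_flat_0, Hpsi.
  - apply is_lim_Derive_pair_flat_0, Hpsi.
  - apply is_lim_pair_sharp_m_infty, Hpsi.
  - apply is_lim_pair_flat_m_infty, Hpsi.
  - intro x. apply pair_flat_Derive_pair_sharp, Hpsi.
Qed.
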